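(* Let $K_1\subset\mathbb C$ and $K_2\subset\mathbb C^m$ be compact sets. Under the identification $F\mapsto(x\mapsto F(x,\cdot))$ of $C(K_1\times K_2)$ with $C(K_1,C(K_2))$, we have \[ A_D(K_1\times K_2)\subset A\big(K_1,A_D(K_2)\big); \] that is, for every $F\in A_D(K_1\times K_2)$ and every $x\in K_1$ the function $F(x,\cdot)$ belongs to $A_D(K_2)$, and the map $x\mapsto F(x,\cdot)$ from $K_1$ to the Banach space $A_D(K_2)$ is continuous on $K_1$ and holomorphic on $K_1^\circ$.
   Context: For a compact $K\subset\mathbb C^n$, $A_D(K)$ is the set of continuous functions $f:K\to\mathbb C$ such that for every open disc $D\subset\mathbb C$ and every injective holomorphic mapping $\phi:D\to\mathbb C^n$ with $\phi(D)\subset K$, $f\circ\phi$ is holomorphic on $D$; it is a Banach space under the supremum norm. For a planar compact $K_1$ and a Banach space $W$, $A(K_1,W)$ is the space of continuous maps $K_1\to W$ that are holomorphic (as $W$-valued functions) on the interior $K_1^\circ$. *)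

From Stdlib Require Import Reals Lra List.
From Stdlib Require Fin.
Open Scope R_scope.

Definition Cx : Type := (R * R)%type.
Definition Cadd (z w : Cx) : Cx := (fst z + fst w, snd z + snd w).
Definition Csub (z w : Cx) : Cx := (fst z - fst w, snd z - snd w).
Definition Cmul (z w : Cx) : Cx :=
  (fst z * fst w - snd z * snd w, fst z * snd w + snd z * fst w).
Definition Cinv (z : Cx) : Cx :=
  (fst z / (fst z ^ 2 + snd z ^ 2), - snd z / (fst z ^ 2 + snd z ^ 2)).
Definition Cdiv (z w : Cx) : Cx := Cmul z (Cinv w).
Definition Cabs (z : Cx) : R := sqrt (fst z ^ 2 + snd z ^ 2).

Definition Vec (n : nat) : Type := Fin.t n -> Cx.

(* (x, y) in C x C^m  |->  point of Cx^(1+m) *)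
Definition vcons {m : nat} (x : Cx) (y : Vec m) : Vec (S m) :=
  fun i => Fin.caseS' i (fun _ => Cx) x y.

Definition is_open {X : Type} (ball : X -> R -> X -> Prop) (U : X -> Prop) : Prop :=
  forall x, U x -> exists r, 0 < r /\ forall y, ball x r y -> U y.

Definition compact_in {X : Type} (ball : X -> R -> X -> Prop) (K : X -> Prop) : Prop :=
  forall (I : Type) (U : I -> X -> Prop),
    (forall i, is_open ball (U i)) ->
    (forall x, K x -> exists i, U i x) ->
    exists l : list I, forall x, K x -> exists i, In i l /\ U i x.

Definition ballC (c : Cx) (r : R) (z : Cx) : Prop := Cabs (Csub z c) < r.
(* sup-norm balls in C^n (same topology as the Euclidean one) *)
Definition ballV {n : nat} (c : Vec n) (r : R) (z : Vec n) : Prop :=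
  forall i, Cabs (Csub (z i) (c i)) < r.

Definition compactC (K : Cx -> Prop) : Prop := compact_in ballC K.
Definition compactV {n : nat} (K : Vec n -> Prop) : Prop := compact_in (@ballV n) K.

Definition interiorC (K : Cx -> Prop) (x : Cx) : Prop :=
  exists r, 0 < r /\ forall z, ballC x r z -> K z.

Definition holo_on (U : Cx -> Prop) (f : Cx -> Cx) : Prop :=
  forall z0, U z0 -> exists l : Cx, forall eps, 0 < eps -> exists delta, 0 < delta /\
    forall z, U z -> 0 < Cabs (Csub z z0) < delta ->
      Cabs (Csub (Cdiv (Csub (f z) (f z0)) (Csub z z0)) l) < eps.

Definition holoV_on {n : nat} (U : Cx -> Prop) (phi : Cx -> Vec n) : Prop :=
  forall i, holo_on U (fun z => phi z i).

Definition injective_on {A B : Type} (U : A -> Prop) (f : A -> B) : Prop :=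
  forall a b, U a -> U b -> f a = f b -> a = b.

Definition continuous_on {n : nat} (K : Vec n -> Prop) (f : Vec n -> Cx) : Prop :=
  forall x, K x -> forall eps, 0 < eps -> exists delta, 0 < delta /\
    forall y, K y -> ballV x delta y -> Cabs (Csub (f y) (f x)) < eps.

Definition A_D {n : nat} (K : Vec n -> Prop) (f : Vec n -> Cx) : Prop :=
  continuous_on K f /\
  forall (c : Cx) (r : R) (phi : Cx -> Vec n),
    0 < r ->
    holoV_on (ballC c r) phi ->
    injective_on (ballC c r) phi ->
    (forall z, ballC c r z -> K (phi z)) ->
    holo_on (ballC c r) (fun z => f (phi z)).

Definition prodset {m : nat} (K1 : Cx -> Prop) (K2 : Vec m -> Prop) : Vec (S m) -> Prop :=
  fun p => exists x y, p = vcons x y /\ K1 x /\ K2 y.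

From Pilot Require Import Defs.
From Stdlib Require Import Reals.
Open Scope R_scope.
From Stdlib Require Import Lra ZArith List FunctionalExtensionality.
From Coquelicot Require Import Coquelicot.

(* Complex numbers are Coquelicot's [C = R * R]; the [Cabs], [Csub], [Cdiv]
   of Defs are definitionally Coquelicot's [Cmod], [Cminus], [Cdiv].

   The derivative of x |-> F(x,.) at x0
      is G(y) = Cauchy's formula for d/dx F(x0,y): the difference quotients
      converge to G uniformly in y (Cauchy estimate), hence G is continuous,
      and G is holomorphic along every analytic disc in K2 by Weierstrass. *)

Notation CInt := (@RInt C_R_CompleteNormedModule).
Notation exC := (@ex_RInt C_R_NormedModule).

Ltac Csplit := apply injective_projections; simpl.

Lemma Cmod_sub_sym (z w : C) : Cmod (z - w) = Cmod (w - z).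
Proof. replace (z - w)%C with (- (w - z))%C by ring. apply Cmod_opp. Qed.

Lemma Cmod_sub_triangle (x y z : C) : Cmod (z - x) <= Cmod (y - x) + Cmod (z - y).
Proof. replace (z - x)%C with ((y - x) + (z - y))%C by ring. apply Cmod_triangle. Qed.

Lemma Cmod_sub_diag (x : C) : Cmod (x - x) = 0.
Proof. replace (x - x)%C with (RtoC 0) by ring. apply Cmod_0. Qed.

Lemma Cminus_neq_0 (z w : C) : z <> w -> (z - w)%C <> RtoC 0.
Proof. intros H E. apply H. replace z with ((z - w) + w)%C by ring. rewrite E. ring. Qed.

Lemma Cmod_le_all_pos (x : C) : (forall eta, 0 < eta -> Cmod x <= eta) -> x = RtoC 0.
Proof.
  intros H. apply Cmod_eq_0. pose proof (Cmod_ge_0 x).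
  destruct (Req_dec (Cmod x) 0) as [E|E]; auto.
  specialize (H (Cmod x / 2) ltac:(lra)). lra.
Qed.

(* The modulus is dominated by the l1 norm and dominates each coordinate;
   these relate discs to axis-parallel squares. *)
Lemma Cmod_le_sum (z : C) : Cmod z <= Rabs (fst z) + Rabs (snd z).
Proof.
  unfold Cmod. destruct z as [x y]; simpl.
  pose proof (Rabs_pos x); pose proof (Rabs_pos y).
  rewrite <- (sqrt_pow2 (Rabs x + Rabs y)) by lra.
  apply sqrt_le_1_alt. simpl.
  pose proof (Rsqr_abs x); pose proof (Rsqr_abs y). unfold Rsqr in *. nra.
Qed.

Lemma Cmod_ge_fst (z : C) : Rabs (fst z) <= Cmod z.
Proof. pose proof (Rmax_Cmod z). pose proof (Rmax_l (Rabs (fst z)) (Rabs (snd z))). lra. Qed.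

Lemma Cmod_ge_snd (z : C) : Rabs (snd z) <= Cmod z.
Proof. pose proof (Rmax_Cmod z). pose proof (Rmax_r (Rabs (fst z)) (Rabs (snd z))). lra. Qed.

Lemma in_square_close (z c : C) r :
  fst c - r <= fst z <= fst c + r -> snd c - r <= snd z <= snd c + r ->
  Cmod (z - c) <= 2 * r.
Proof.
  intros H1 H2. eapply Rle_trans. apply Cmod_le_sum. destruct z, c.
  unfold Cminus, Cplus, Copp; simpl in *.
  unfold Rabs; repeat destruct Rcase_abs; lra.
Qed.

Definition cont_at (f : C -> C) (p : C) : Prop :=
  forall eps, 0 < eps -> exists delta, 0 < delta /\
    forall z, Cmod (z - p) < delta -> Cmod (f z - f p) < eps.

Definition cderiv (f : C -> C) (p l : C) : Prop :=
  forall eps, 0 < eps -> exists delta, 0 < delta /\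
    forall z, Cmod (z - p) < delta -> Cmod (f z - f p - l * (z - p)) <= eps * Cmod (z - p).

Lemma cont_at_const (k p : C) : cont_at (fun _ => k) p.
Proof. intros eps He. exists 1. split; [lra|]. intros z _. rewrite Cmod_sub_diag. lra. Qed.

Lemma cont_at_minus (f g : C -> C) p :
  cont_at f p -> cont_at g p -> cont_at (fun z => f z - g z)%C p.
Proof.
  intros Hf Hg eps Heps.
  destruct (Hf (eps/2) ltac:(lra)) as [d1 [Hd1 H1]].
  destruct (Hg (eps/2) ltac:(lra)) as [d2 [Hd2 H2]].
  exists (Rmin d1 d2). split; [apply Rmin_pos; auto|]. intros z Hz.
  pose proof (Rmin_l d1 d2); pose proof (Rmin_r d1 d2).
  specialize (H1 z ltac:(lra)). specialize (H2 z ltac:(lra)).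
  replace (f z - g z - (f p - g p))%C with ((f z - f p) - (g z - g p))%C by ring.
  eapply Rle_lt_trans. apply Cmod_triangle. rewrite Cmod_opp. lra.
Qed.

Lemma cont_at_mult (u v : C -> C) p :
  cont_at u p -> cont_at v p -> cont_at (fun z => u z * v z)%C p.
Proof.
  intros Hu Hv eps Heps.
  set (U := Cmod (u p)). set (V := Cmod (v p)).
  assert (HU : 0 <= U) by apply Cmod_ge_0. assert (HV : 0 <= V) by apply Cmod_ge_0.
  set (eta := Rmin 1 (eps / (U + V + 1))).
  assert (He : 0 < eta) by (unfold eta; apply Rmin_pos; [lra| apply Rdiv_lt_0_compat; lra]).
  assert (He1 : eta <= 1) by apply Rmin_l.
  assert (He2 : eta * (U + V + 1) <= eps).
  { assert (eta <= eps / (U + V + 1)) by apply Rmin_r.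
    apply Rmult_le_compat_r with (r := U + V + 1) in H; [|lra].
    replace (eps / (U + V + 1) * (U + V + 1)) with eps in H by (field; lra). lra. }
  destruct (Hu eta He) as [d1 [Hd1 H1]]. destruct (Hv eta He) as [d2 [Hd2 H2]].
  exists (Rmin d1 d2). split; [apply Rmin_pos; auto|]. intros z Hz.
  pose proof (Rmin_l d1 d2); pose proof (Rmin_r d1 d2).
  specialize (H1 z ltac:(lra)). specialize (H2 z ltac:(lra)).
  replace (u z * v z - u p * v p)%C with
    ((u z - u p) * (v z - v p) + (u z - u p) * v p + u p * (v z - v p))%C by ring.
  eapply Rle_lt_trans. apply Cmod_triangle. rewrite Cmod_mult.
  eapply Rle_lt_trans. apply Rplus_le_compat_r. apply Cmod_triangle.
  rewrite !Cmod_mult. fold U V.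
  set (A := Cmod (u z - u p)) in *. set (B := Cmod (v z - v p)) in *.
  assert (0 <= A) by apply Cmod_ge_0. assert (0 <= B) by apply Cmod_ge_0.
  assert (A * B <= eta * B) by (apply Rmult_le_compat_r; lra).
  assert (A * V <= eta * V) by (apply Rmult_le_compat_r; lra).
  assert (U * B <= U * eta) by (apply Rmult_le_compat_l; lra).
  nra.
Qed.

Lemma cderiv_cont (f : C -> C) p l : cderiv f p l -> cont_at f p.
Proof.
  intros H eps Heps.
  destruct (H 1 Rlt_0_1) as [d [Hd Hz]].
  pose proof (Cmod_ge_0 l) as Hl.
  exists (Rmin d (eps / (Cmod l + 1))). split.
  { apply Rmin_pos; auto. apply Rdiv_lt_0_compat; lra. }
  intros z Hzp.
  assert (Hz1 : Cmod (z - p) < d) by (eapply Rlt_le_trans; [exact Hzp|apply Rmin_l]).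
  assert (Hz2 : Cmod (z - p) < eps / (Cmod l + 1))
    by (eapply Rlt_le_trans; [exact Hzp|apply Rmin_r]).
  specialize (Hz z Hz1).
  replace (f z - f p)%C with ((f z - f p - l * (z - p)) + l * (z - p))%C by ring.
  eapply Rle_lt_trans. apply Cmod_triangle. rewrite Cmod_mult.
  pose proof (Cmod_ge_0 (z - p)).
  assert (Cmod (z - p) * (Cmod l + 1) < eps).
  { apply Rmult_lt_compat_r with (r := Cmod l + 1) in Hz2; [|lra].
    unfold Rdiv in Hz2. rewrite Rmult_assoc, Rinv_l, Rmult_1_r in Hz2 by lra. lra. }
  lra.
Qed.

Lemma cderiv_lipschitz (u : C -> C) p lu : cderiv u p lu -> exists d, 0 < d /\
  forall z, Cmod (z - p) < d -> Cmod (u z - u p) <= (Cmod lu + 1) * Cmod (z - p).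
Proof.
  intros H. destruct (H 1 Rlt_0_1) as [d [Hd Hz]]. exists d; split; auto.
  intros z Hzp. specialize (Hz z Hzp).
  replace (u z - u p)%C with ((u z - u p - lu * (z - p)) + lu * (z - p))%C by ring.
  eapply Rle_trans. apply Cmod_triangle. rewrite Cmod_mult. lra.
Qed.

Lemma cderiv_ext (u v : C -> C) p l : (forall z, u z = v z) -> cderiv u p l -> cderiv v p l.
Proof.
  intros E H eps Heps. destruct (H eps Heps) as [d [Hd H']]. exists d; split; auto.
  intros z Hz. rewrite <- !E. auto.
Qed.

Lemma cderiv_affine (al be p : C) : cderiv (fun z => al + be * z)%C p be.
Proof.
  intros eps Heps. exists 1. split; [lra|]. intros z _.
  replace (al + be * z - (al + be * p) - be * (z - p))%C with (RtoC 0) by ring.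
  rewrite Cmod_0. pose proof (Cmod_ge_0 (z - p)). nra.
Qed.

Lemma cderiv_const (k p : C) : cderiv (fun _ => k) p (RtoC 0).
Proof.
  apply (cderiv_ext (fun z => k + 0 * z)%C). { intros z. ring. } apply cderiv_affine.
Qed.

Lemma cderiv_minus (u v : C -> C) p lu lv : cderiv u p lu -> cderiv v p lv ->
  cderiv (fun z => u z - v z)%C p (lu - lv)%C.
Proof.
  intros Hu Hv eps Heps.
  destruct (Hu (eps/2) ltac:(lra)) as [d1 [Hd1 H1]].
  destruct (Hv (eps/2) ltac:(lra)) as [d2 [Hd2 H2]].
  exists (Rmin d1 d2). split; [apply Rmin_pos; auto|]. intros z Hz.
  pose proof (Rmin_l d1 d2); pose proof (Rmin_r d1 d2).
  specialize (H1 z ltac:(lra)). specialize (H2 z ltac:(lra)).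
  replace (u z - v z - (u p - v p) - (lu - lv) * (z - p))%C with
    ((u z - u p - lu * (z - p)) - (v z - v p - lv * (z - p)))%C by ring.
  eapply Rle_trans. apply Cmod_triangle. rewrite Cmod_opp. lra.
Qed.

Lemma scaled_le (A K e m : R) : 0 <= K -> 0 <= m -> 0 <= e -> 0 <= A ->
  A <= e / (K + 1) * m -> A * K <= e * m.
Proof.
  intros HK Hm He HA H.
  assert (E : e / (K + 1) * m * (K + 1) = e * m) by (field; lra).
  assert (A * K <= A * (K + 1)) by nra.
  assert (A * (K + 1) <= e / (K + 1) * m * (K + 1)) by (apply Rmult_le_compat_r; lra).
  lra.
Qed.

Lemma cderiv_mult (u v : C -> C) p lu lv : cderiv u p lu -> cderiv v p lv ->
  cderiv (fun z => u z * v z)%C p (lu * v p + u p * lv)%C.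
Proof.
  intros Hu Hv eps Heps.
  set (U := Cmod (u p)). set (V := Cmod (v p)). set (Lu := Cmod lu).
  assert (HU : 0 <= U) by apply Cmod_ge_0.
  assert (HV : 0 <= V) by apply Cmod_ge_0.
  assert (HL : 0 <= Lu) by apply Cmod_ge_0.
  destruct (Hu (eps / 3 / (V + 1))) as [d1 [Hd1 H1]].
  { apply Rdiv_lt_0_compat; lra. }
  destruct (Hv (eps / 3 / (U + 1))) as [d2 [Hd2 H2]].
  { apply Rdiv_lt_0_compat; lra. }
  destruct (cderiv_lipschitz u p lu Hu) as [d3 [Hd3 H3]].
  destruct (cderiv_cont v p lv Hv (eps / 3 / (Lu + 1))) as [d4 [Hd4 H4]].
  { apply Rdiv_lt_0_compat; lra. }
  exists (Rmin (Rmin d1 d2) (Rmin d3 d4)). split.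
  { repeat apply Rmin_pos; auto. }
  intros z Hz.
  pose proof (Rmin_l (Rmin d1 d2) (Rmin d3 d4)); pose proof (Rmin_r (Rmin d1 d2) (Rmin d3 d4)).
  pose proof (Rmin_l d1 d2); pose proof (Rmin_r d1 d2).
  pose proof (Rmin_l d3 d4); pose proof (Rmin_r d3 d4).
  specialize (H1 z ltac:(lra)). specialize (H2 z ltac:(lra)).
  specialize (H3 z ltac:(lra)). specialize (H4 z ltac:(lra)).
  replace (u z * v z - u p * v p - (lu * v p + u p * lv) * (z - p))%C with
    ((u z - u p - lu * (z - p)) * v p + u p * (v z - v p - lv * (z - p))
     + (u z - u p) * (v z - v p))%C by ring.
  set (m := Cmod (z - p)) in *. assert (Hm : 0 <= m) by apply Cmod_ge_0.
  eapply Rle_trans. apply Cmod_triangle. rewrite Cmod_mult.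
  eapply Rle_trans. apply Rplus_le_compat_r. apply Cmod_triangle.
  rewrite !Cmod_mult. fold U V.
  pose proof (Cmod_ge_0 (u z - u p - lu * (z - p))). pose proof (Cmod_ge_0 (v z - v p - lv * (z - p))).
  pose proof (Cmod_ge_0 (u z - u p)). pose proof (Cmod_ge_0 (v z - v p)).
  assert (T1 : Cmod (u z - u p - lu * (z - p)) * V <= eps / 3 * m) by (apply scaled_le; lra).
  assert (T2 : U * Cmod (v z - v p - lv * (z - p)) <= eps / 3 * m)
    by (rewrite Rmult_comm; apply scaled_le; lra).
  assert (T3 : Cmod (u z - u p) * Cmod (v z - v p) <= eps / 3 * m).
  { fold Lu in H3. apply Rle_trans with ((Lu + 1) * m * (eps / 3 / (Lu + 1))).
    - apply Rmult_le_compat; lra.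
    - right. field. lra. }
  lra.
Qed.

Lemma cderiv_inv_sub (w p : C) : p <> w ->
  cderiv (fun z => / (z - w))%C p (- / ((p - w) * (p - w)))%C.
Proof.
  intros Hpw eps Heps.
  assert (HD : (p - w)%C <> RtoC 0) by (apply Cminus_neq_0; exact Hpw).
  set (m := Cmod (p - w)).
  assert (Hm : 0 < m) by (apply Cmod_gt_0; auto).
  exists (Rmin (m / 2) (eps * (m * m * m) / 2)). split.
  { apply Rmin_pos; [lra| apply Rdiv_lt_0_compat; [| lra]].
    apply Rmult_lt_0_compat; [lra| apply Rmult_lt_0_compat; [nra|lra]]. }
  intros z Hz.
  pose proof (Rmin_l (m / 2) (eps * (m * m * m) / 2)).
  pose proof (Rmin_r (m / 2) (eps * (m * m * m) / 2)).
  set (h := (z - p)%C). set (hm := Cmod h). assert (Hh : 0 <= hm) by apply Cmod_ge_0.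
  assert (Hzw : m / 2 <= Cmod (z - w)).
  { pose proof (Cmod_sub_triangle w z p) as T. rewrite (Cmod_sub_sym p z) in T.
    fold m h hm in T. fold h hm in Hz. lra. }
  assert (HZ : (z - w)%C <> RtoC 0) by (intros E; rewrite E, Cmod_0 in Hzw; lra).
  replace (/ (z - w) - / (p - w) - - / ((p - w) * (p - w)) * h)%C with
    (h * h / ((z - w) * ((p - w) * (p - w))))%C.
  2: { unfold h. field. split; auto. }
  rewrite Cmod_div, !Cmod_mult by (apply Cmult_neq_0; auto; apply Cmult_neq_0; auto).
  fold hm m.
  fold h hm in Hz. assert (hm <= eps * (m * m * m) / 2) by lra.
  apply (Rmult_le_reg_r (Cmod (z - w) * (m * m))).
  { apply Rmult_lt_0_compat; nra. }
  unfold Rdiv. rewrite Rmult_assoc, Rinv_l by (apply Rgt_not_eq; apply Rmult_lt_0_compat; nra).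
  rewrite Rmult_1_r.
  assert (hm * hm <= hm * (eps * (m * m * m) / 2)) by (apply Rmult_le_compat_l; lra).
  assert (0 <= eps * hm * (m * m)) by (apply Rmult_le_pos; [nra| nra]).
  assert (eps * hm * (m * m) * (m / 2) <= eps * hm * (m * m) * Cmod (z - w))
    by (apply Rmult_le_compat_l; lra).
  nra.
Qed.

Lemma cont_at_inv_sub (w p : C) : p <> w -> cont_at (fun z => / (z - w))%C p.
Proof. intros H. eapply cderiv_cont. apply cderiv_inv_sub. exact H. Qed.

Lemma cont_at_inv (p : C) : p <> RtoC 0 -> cont_at (fun z => / z)%C p.
Proof.
  intros Hp. apply (cderiv_cont _ _ (- / ((p - 0) * (p - 0)))%C).
  apply (cderiv_ext (fun z => / (z - 0))%C). { intros z. f_equal. ring. }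
  apply cderiv_inv_sub. exact Hp.
Qed.

Lemma scal_C (r : R) (v : C) : scal r v = (RtoC r * v)%C.
Proof.
  unfold scal; simpl. unfold prod_scal, Cmult, RtoC; simpl.
  f_equal; unfold scal; simpl; unfold mult; simpl; ring.
Qed.

(* Coquelicot integrates C as a real vector space; complex scalars pass through. *)
Lemma is_RInt_Cmult (h : R -> C) (k : C) a b (l : C) :
  @is_RInt C_R_NormedModule h a b l ->
  @is_RInt C_R_NormedModule (fun t => (k * h t)%C) a b (k * l)%C.
Proof.
  intros H.
  pose proof (is_RInt_fct_extend_fst _ _ _ _ H) as H1.
  pose proof (is_RInt_fct_extend_snd _ _ _ _ H) as H2.
  simpl in H1, H2.
  apply (is_RInt_fct_extend_pair (U:=R_NormedModule) (V:=R_NormedModule)); simpl.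
  - apply (is_RInt_minus (V:=R_NormedModule)).
    + apply (is_RInt_scal (V:=R_NormedModule) _ _ _ (fst k) _ H1).
    + apply (is_RInt_scal (V:=R_NormedModule) _ _ _ (snd k) _ H2).
  - apply (is_RInt_plus (V:=R_NormedModule)).
    + apply (is_RInt_scal (V:=R_NormedModule) _ _ _ (fst k) _ H2).
    + apply (is_RInt_scal (V:=R_NormedModule) _ _ _ (snd k) _ H1).
Qed.

Lemma CInt_mult (h : R -> C) (k : C) a b : exC h a b ->
  CInt (fun t => (k * h t)%C) a b = (k * CInt h a b)%C.
Proof.
  intros H. apply is_RInt_unique. apply is_RInt_Cmult.
  apply (RInt_correct (V:=C_R_CompleteNormedModule)). exact H.
Qed.

Lemma CInt_plus (f g : R -> C) a b : exC f a b -> exC g a b ->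
  CInt (fun t => (f t + g t)%C) a b = (CInt f a b + CInt g a b)%C.
Proof. intros. apply (RInt_plus (V:=C_R_CompleteNormedModule) f g a b); auto. Qed.

Lemma CInt_minus (f g : R -> C) a b : exC f a b -> exC g a b ->
  CInt (fun t => (f t - g t)%C) a b = (CInt f a b - CInt g a b)%C.
Proof. intros. apply (RInt_minus (V:=C_R_CompleteNormedModule) f g a b); auto. Qed.

Lemma CInt_const a b (k : C) : CInt (fun _ => k) a b = (RtoC (b - a) * k)%C.
Proof. rewrite (RInt_const (V:=C_R_CompleteNormedModule)). apply scal_C. Qed.

Lemma CInt_bound (h : R -> C) a b M : a <= b -> exC h a b ->
  (forall t, a <= t <= b -> Cmod (h t) <= M) -> Cmod (CInt h a b) <= (b - a) * M.
Proof.
  intros Hab Hex HM. rewrite Cmod_norm.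
  apply (norm_RInt_le_const (V:=C_R_NormedModule) h a b); auto.
  - intros t Ht. rewrite <- Cmod_norm. auto.
  - apply (RInt_correct (V:=C_R_CompleteNormedModule)). auto.
Qed.

Lemma CInt_pair (p q : R -> R) a b : ex_RInt p a b -> ex_RInt q a b ->
  CInt (fun t => (p t, q t)) a b = (RInt p a b, RInt q a b).
Proof.
  intros Hp Hq. apply (is_RInt_unique (V:=C_R_CompleteNormedModule)).
  apply (is_RInt_fct_extend_pair (U:=R_NormedModule) (V:=R_NormedModule)); simpl;
  apply (RInt_correct (V:=R_CompleteNormedModule)); auto.
Qed.

Lemma CInt_rescale (f h : R -> C) s v : 0 < s -> exC f (v - s) (v + s) ->
  (forall y, -1 <= y <= 1 -> Cmult (RtoC s) (f (s * y + v)) = h y) ->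
  CInt f (v - s) (v + s) = CInt h (-1) 1.
Proof.
  intros Hs Hex Hp.
  rewrite (RInt_ext (V:=C_R_CompleteNormedModule) h (fun y => scal s (f (s * y + v)))).
  2: { intros x Hx. rewrite Rmin_left, Rmax_right in Hx by lra.
       rewrite scal_C. symmetry. apply Hp. lra. }
  transitivity (CInt f (s * -1 + v) (s * 1 + v)).
  - f_equal; ring.
  - symmetry. apply (RInt_comp_lin (V:=C_R_CompleteNormedModule) f s v (-1) 1).
    replace (s * -1 + v) with (v - s) by ring. replace (s * 1 + v) with (v + s) by ring.
    exact Hex.
Qed.

Lemma continuous_of_cont (h : R -> C) (t : R) :
  (forall eps, 0 < eps -> exists delta, 0 < delta /\
     forall s, Rabs (s - t) < delta -> Cmod (h s - h t) < eps) ->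
  continuous h t.
Proof.
  intros H. apply filterlim_locally. intros eps.
  destruct (H eps (cond_pos eps)) as [d [Hd Hz]].
  exists (mkposreal d Hd). intros s Hs.
  apply C_NormedModule_mixin_compat1. apply Hz. exact Hs.
Qed.

Lemma ex_CInt_hor (g : C -> C) a b y : a <= b ->
  (forall x, a <= x <= b -> cont_at g (x, y)) -> exC (fun t => g (t, y)) a b.
Proof.
  intros Hab H. apply (ex_RInt_continuous (V:=C_R_CompleteNormedModule)). intros z Hz.
  rewrite Rmin_left in Hz by lra. rewrite Rmax_right in Hz by lra.
  apply continuous_of_cont. intros eps Heps.
  destruct (H z Hz eps Heps) as [d [Hd Hc]]. exists d; split; auto.
  intros s Hs. apply Hc.
  replace ((s, y) - (z, y))%C with (RtoC (s - z))
    by (unfold Cminus, Cplus, Copp, RtoC; simpl; f_equal; ring).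
  rewrite Cmod_R. exact Hs.
Qed.

Lemma ex_CInt_ver (g : C -> C) c d x : c <= d ->
  (forall y, c <= y <= d -> cont_at g (x, y)) -> exC (fun t => g (x, t)) c d.
Proof.
  intros Hcd H. apply (ex_RInt_continuous (V:=C_R_CompleteNormedModule)). intros z Hz.
  rewrite Rmin_left in Hz by lra. rewrite Rmax_right in Hz by lra.
  apply continuous_of_cont. intros eps Heps.
  destruct (H z Hz eps Heps) as [e [He Hc]]. exists e; split; auto.
  intros s Hs. apply Hc.
  replace ((x, s) - (x, z))%C with (Ci * RtoC (s - z))%C
    by (unfold Cminus, Cplus, Copp, RtoC, Ci, Cmult; simpl; f_equal; ring).
  rewrite Cmod_mult, Cmod_Ci, Cmod_R. lra.
Qed.

(** * Integrals over the boundary of a rectangle *)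

(* Positively oriented boundary integral over [a, b] x [c, d]. *)
Definition rect_int (g : C -> C) a b c d : C :=
  (CInt (fun t => g (t, c)) a b - CInt (fun t => g (t, d)) a b +
   Ci * (CInt (fun t => g (b, t)) c d - CInt (fun t => g (a, t)) c d))%C.

Definition on_bdry a b c d (z : C) : Prop :=
  (a <= fst z <= b /\ (snd z = c \/ snd z = d)) \/
  (c <= snd z <= d /\ (fst z = a \/ fst z = b)).

Definition cont_on_bdry (g : C -> C) a b c d : Prop :=
  forall z, on_bdry a b c d z -> cont_at g z.

Lemma cont_on_bdry_ex (g : C -> C) a b c d : a <= b -> c <= d -> cont_on_bdry g a b c d ->
  exC (fun t => g (t, c)) a b /\ exC (fun t => g (t, d)) a b /\
  exC (fun t => g (b, t)) c d /\ exC (fun t => g (a, t)) c d.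
Proof.
  intros Hab Hcd H. repeat split.
  - apply ex_CInt_hor; auto. intros x Hx. apply H. left; simpl; auto.
  - apply ex_CInt_hor; auto. intros x Hx. apply H. left; simpl; auto.
  - apply ex_CInt_ver; auto. intros y Hy. apply H. right; simpl; auto.
  - apply ex_CInt_ver; auto. intros y Hy. apply H. right; simpl; auto.
Qed.

Lemma rect_int_plus (g1 g2 : C -> C) a b c d : a <= b -> c <= d ->
  cont_on_bdry g1 a b c d -> cont_on_bdry g2 a b c d ->
  rect_int (fun z => g1 z + g2 z)%C a b c d = (rect_int g1 a b c d + rect_int g2 a b c d)%C.
Proof.
  intros Hab Hcd H1 H2.
  destruct (cont_on_bdry_ex g1 a b c d Hab Hcd H1) as [A1 [A2 [A3 A4]]].
  destruct (cont_on_bdry_ex g2 a b c d Hab Hcd H2) as [B1 [B2 [B3 B4]]].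
  unfold rect_int. rewrite !CInt_plus by auto. ring.
Qed.

Lemma rect_int_minus (g1 g2 : C -> C) a b c d : a <= b -> c <= d ->
  cont_on_bdry g1 a b c d -> cont_on_bdry g2 a b c d ->
  rect_int (fun z => g1 z - g2 z)%C a b c d = (rect_int g1 a b c d - rect_int g2 a b c d)%C.
Proof.
  intros Hab Hcd H1 H2.
  destruct (cont_on_bdry_ex g1 a b c d Hab Hcd H1) as [A1 [A2 [A3 A4]]].
  destruct (cont_on_bdry_ex g2 a b c d Hab Hcd H2) as [B1 [B2 [B3 B4]]].
  unfold rect_int. rewrite !CInt_minus by auto. ring.
Qed.

Lemma rect_int_scal (g : C -> C) (k : C) a b c d : a <= b -> c <= d ->
  cont_on_bdry g a b c d ->
  rect_int (fun z => k * g z)%C a b c d = (k * rect_int g a b c d)%C.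
Proof.
  intros Hab Hcd H1.
  destruct (cont_on_bdry_ex g a b c d Hab Hcd H1) as [A1 [A2 [A3 A4]]].
  unfold rect_int. rewrite !CInt_mult by auto. ring.
Qed.

Lemma rect_int_ext (g1 g2 : C -> C) a b c d : a <= b -> c <= d ->
  (forall z, on_bdry a b c d z -> g1 z = g2 z) -> rect_int g1 a b c d = rect_int g2 a b c d.
Proof.
  intros Hab Hcd H. unfold rect_int.
  rewrite (RInt_ext (V:=C_R_CompleteNormedModule) (fun t => g1 (t, c)) (fun t => g2 (t, c))).
  rewrite (RInt_ext (V:=C_R_CompleteNormedModule) (fun t => g1 (t, d)) (fun t => g2 (t, d))).
  rewrite (RInt_ext (V:=C_R_CompleteNormedModule) (fun t => g1 (b, t)) (fun t => g2 (b, t))).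
  rewrite (RInt_ext (V:=C_R_CompleteNormedModule) (fun t => g1 (a, t)) (fun t => g2 (a, t))).
  reflexivity.
  all: intros x Hx; rewrite ?Rmin_left, ?Rmax_right in Hx by lra; apply H;
    unfold on_bdry; simpl; lra.
Qed.

Lemma rect_int_bound (g : C -> C) a b c d M : a <= b -> c <= d -> cont_on_bdry g a b c d ->
  (forall z, on_bdry a b c d z -> Cmod (g z) <= M) ->
  Cmod (rect_int g a b c d) <= 2 * M * ((b - a) + (d - c)).
Proof.
  intros Hab Hcd H HM.
  destruct (cont_on_bdry_ex g a b c d Hab Hcd H) as [A1 [A2 [A3 A4]]].
  assert (Eh : forall y, y = c \/ y = d -> Cmod (CInt (fun t => g (t, y)) a b) <= (b - a) * M).
  { intros y Hy. apply CInt_bound; auto.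
    - destruct Hy as [-> | ->]; auto.
    - intros; apply HM; unfold on_bdry; simpl; lra. }
  assert (Ev : forall x, x = a \/ x = b -> Cmod (CInt (fun t => g (x, t)) c d) <= (d - c) * M).
  { intros x Hx. apply CInt_bound; auto.
    - destruct Hx as [-> | ->]; auto.
    - intros; apply HM; unfold on_bdry; simpl; lra. }
  pose proof (Eh c (or_introl eq_refl)). pose proof (Eh d (or_intror eq_refl)).
  pose proof (Ev a (or_introl eq_refl)). pose proof (Ev b (or_intror eq_refl)).
  unfold rect_int.
  eapply Rle_trans. apply Cmod_triangle.
  rewrite Cmod_mult, Cmod_Ci, Rmult_1_l.
  eapply Rle_trans. apply Rplus_le_compat; apply Cmod_triangle.
  rewrite !Cmod_opp. lra.
Qed.

(* Cutting a rectangle in two: the integrals over the common side cancel. *)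
Lemma rect_int_split_x (g : C -> C) a m b c d : a <= m <= b -> c <= d ->
  cont_on_bdry g a m c d -> cont_on_bdry g m b c d ->
  rect_int g a b c d = (rect_int g a m c d + rect_int g m b c d)%C.
Proof.
  intros Hm Hcd H1 H2.
  destruct (cont_on_bdry_ex g a m c d ltac:(lra) Hcd H1) as [A1 [A2 [A3 A4]]].
  destruct (cont_on_bdry_ex g m b c d ltac:(lra) Hcd H2) as [B1 [B2 [B3 B4]]].
  unfold rect_int.
  rewrite <- (RInt_Chasles (V:=C_R_CompleteNormedModule) (fun t => g (t, c)) a m b) by auto.
  rewrite <- (RInt_Chasles (V:=C_R_CompleteNormedModule) (fun t => g (t, d)) a m b) by auto.
  set (P1 := CInt (fun t => g (t, c)) a m); set (P2 := CInt (fun t => g (t, c)) m b).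
  set (P3 := CInt (fun t => g (t, d)) a m); set (P4 := CInt (fun t => g (t, d)) m b).
  change (plus P1 P2) with (P1 + P2)%C. change (plus P3 P4) with (P3 + P4)%C. ring.
Qed.

Lemma rect_int_split_y (g : C -> C) a b c m d : a <= b -> c <= m <= d ->
  cont_on_bdry g a b c m -> cont_on_bdry g a b m d ->
  rect_int g a b c d = (rect_int g a b c m + rect_int g a b m d)%C.
Proof.
  intros Hab Hm H1 H2.
  destruct (cont_on_bdry_ex g a b c m Hab ltac:(lra) H1) as [A1 [A2 [A3 A4]]].
  destruct (cont_on_bdry_ex g a b m d Hab ltac:(lra) H2) as [B1 [B2 [B3 B4]]].
  unfold rect_int.
  rewrite <- (RInt_Chasles (V:=C_R_CompleteNormedModule) (fun t => g (b, t)) c m d) by auto.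
  rewrite <- (RInt_Chasles (V:=C_R_CompleteNormedModule) (fun t => g (a, t)) c m d) by auto.
  set (P1 := CInt (fun t => g (b, t)) c m); set (P2 := CInt (fun t => g (b, t)) m d).
  set (P3 := CInt (fun t => g (a, t)) c m); set (P4 := CInt (fun t => g (a, t)) m d).
  change (plus P1 P2) with (P1 + P2)%C. change (plus P3 P4) with (P3 + P4)%C. ring.
Qed.

(* Affine functions have a primitive, so their boundary integrals vanish. *)
Lemma rect_int_affine (al be : C) a b c d : a <= b -> c <= d ->
  rect_int (fun z => al + be * z)%C a b c d = RtoC 0.
Proof.
  intros Hab Hcd.
  assert (HB : cont_on_bdry (fun z => al + be * z)%C a b c d).
  { intros z _. eapply cderiv_cont. apply cderiv_affine. }
  destruct (cont_on_bdry_ex _ a b c d Hab Hcd HB) as [A1 [A2 [A3 A4]]].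
  unfold rect_int. rewrite <- !CInt_minus by auto.
  rewrite (RInt_ext (V:=C_R_CompleteNormedModule) _ (fun _ => Cmult be (0, c - d))).
  rewrite (RInt_ext (V:=C_R_CompleteNormedModule) (fun t => _ - _)%C
             (fun _ => Cmult be (b - a, 0))).
  rewrite !CInt_const. destruct be as [u v]. unfold RtoC, Ci, Cmult, Cplus; Csplit; ring.
  all: intros; destruct be; unfold Cminus, Cmult, Cplus, Copp; Csplit; ring.
Qed.

(** * Goursat's theorem for rectangles *)

Record rect := mkR { ra : R; rb : R; rc : R; rd : R }.

Definition rint (g : C -> C) (r : rect) := rect_int g (ra r) (rb r) (rc r) (rd r).
Definition in_rect (r : rect) (z : C) := ra r <= fst z <= rb r /\ rc r <= snd z <= rd r.
Definition rect_wf (r : rect) := ra r <= rb r /\ rc r <= rd r.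
Definition cont_on_rect (g : C -> C) (r : rect) := forall z, in_rect r z -> cont_at g z.

Definition quarter1 r := mkR (ra r) ((ra r + rb r)/2) (rc r) ((rc r + rd r)/2).
Definition quarter2 r := mkR ((ra r + rb r)/2) (rb r) (rc r) ((rc r + rd r)/2).
Definition quarter3 r := mkR (ra r) ((ra r + rb r)/2) ((rc r + rd r)/2) (rd r).
Definition quarter4 r := mkR ((ra r + rb r)/2) (rb r) ((rc r + rd r)/2) (rd r).

Definition half_of (r r' : rect) : Prop :=
  ra r <= ra r' /\ rb r' <= rb r /\ rb r' - ra r' = (rb r - ra r) / 2 /\
  rc r <= rc r' /\ rd r' <= rd r /\ rd r' - rc r' = (rd r - rc r) / 2.

Lemma quarters_half r : rect_wf r ->
  half_of r (quarter1 r) /\ half_of r (quarter2 r) /\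
  half_of r (quarter3 r) /\ half_of r (quarter4 r).
Proof. intros [H1 H2]; unfold half_of, quarter1, quarter2, quarter3, quarter4; simpl; repeat split; lra. Qed.

Definition worst_quarter (g : C -> C) (r : rect) : rect :=
  if Rle_dec (Cmod (rint g r) / 4) (Cmod (rint g (quarter1 r))) then quarter1 r else
  if Rle_dec (Cmod (rint g r) / 4) (Cmod (rint g (quarter2 r))) then quarter2 r else
  if Rle_dec (Cmod (rint g r) / 4) (Cmod (rint g (quarter3 r))) then quarter3 r else quarter4 r.

Lemma worst_quarter_half g r : rect_wf r -> half_of r (worst_quarter g r).
Proof.
  intros H. destruct (quarters_half r H) as [A [B [C' D]]].
  unfold worst_quarter. repeat destruct Rle_dec; auto.
Qed.

Lemma rint_quarters g r : rect_wf r -> cont_on_rect g r ->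
  rint g r = (rint g (quarter1 r) + rint g (quarter2 r) + rint g (quarter3 r) + rint g (quarter4 r))%C.
Proof.
  intros [H1 H2] HC. unfold rint, quarter1, quarter2, quarter3, quarter4; simpl.
  set (ma := (ra r + rb r) / 2). set (mc := (rc r + rd r) / 2).
  assert (S : forall a' b' c' d', ra r <= a' -> b' <= rb r -> rc r <= c' -> d' <= rd r ->
     a' <= b' -> c' <= d' -> cont_on_bdry g a' b' c' d').
  { intros a' b' c' d' ? ? ? ? ? ? z Hz. apply HC. unfold on_bdry, in_rect in *.
    destruct Hz as [[? [->| ->]]|[? [->| ->]]]; lra. }
  rewrite (rect_int_split_y g (ra r) (rb r) (rc r) mc (rd r)) by (unfold mc; try apply S; lra).
  rewrite (rect_int_split_x g (ra r) ma (rb r) (rc r) mc) by (unfold ma, mc; try apply S; lra).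
  rewrite (rect_int_split_x g (ra r) ma (rb r) mc (rd r)) by (unfold ma, mc; try apply S; lra).
  ring.
Qed.

Lemma worst_quarter_big g r : rect_wf r -> cont_on_rect g r ->
  Cmod (rint g r) / 4 <= Cmod (rint g (worst_quarter g r)).
Proof.
  intros W HC. unfold worst_quarter.
  destruct Rle_dec as [h1|h1]; auto.
  destruct Rle_dec as [h2|h2]; auto.
  destruct Rle_dec as [h3|h3]; auto.
  assert (Cmod (rint g r) <= Cmod (rint g (quarter1 r) + rint g (quarter2 r) + rint g (quarter3 r))
                             + Cmod (rint g (quarter4 r))).
  { rewrite (rint_quarters g r W HC) at 1. apply Cmod_triangle. }
  pose proof (Cmod_triangle (rint g (quarter1 r) + rint g (quarter2 r)) (rint g (quarter3 r))).
  pose proof (Cmod_triangle (rint g (quarter1 r)) (rint g (quarter2 r))).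
  lra.
Qed.

Fixpoint nested (g : C -> C) (r0 : rect) (n : nat) : rect :=
  match n with O => r0 | S k => worst_quarter g (nested g r0 k) end.

Lemma nested_props g r0 n : rect_wf r0 -> cont_on_rect g r0 ->
  rect_wf (nested g r0 n) /\
  ra r0 <= ra (nested g r0 n) /\ rb (nested g r0 n) <= rb r0 /\
  rc r0 <= rc (nested g r0 n) /\ rd (nested g r0 n) <= rd r0 /\
  rb (nested g r0 n) - ra (nested g r0 n) = (rb r0 - ra r0) / 2 ^ n /\
  rd (nested g r0 n) - rc (nested g r0 n) = (rd r0 - rc r0) / 2 ^ n /\
  Cmod (rint g r0) / 4 ^ n <= Cmod (rint g (nested g r0 n)).
Proof.
  intros W HC. induction n as [|n IH]; simpl.
  - destruct W. repeat split; try lra; field_simplify; lra.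
  - destruct IH as [Wn [I1 [I2 [I3 [I4 [I5 [I6 I7]]]]]]].
    assert (Cn : cont_on_rect g (nested g r0 n)).
    { intros z Hz. apply HC. unfold in_rect in *. lra. }
    destruct (worst_quarter_half g _ Wn) as [C1 [C2 [C3 [C4 [C5 C6]]]]].
    pose proof (worst_quarter_big g _ Wn Cn).
    assert (P2 : 0 < 2 ^ n) by (apply pow_lt; lra).
    assert (P4 : 0 < 4 ^ n) by (apply pow_lt; lra).
    destruct Wn. repeat split; try lra.
    + rewrite C3, I5. field. lra.
    + rewrite C6, I6. field. lra.
    + replace (Cmod (rint g r0) / (4 * 4 ^ n)) with ((Cmod (rint g r0) / 4 ^ n) / 4)
        by (field; lra). lra.
Qed.

Lemma nested_mono g r0 n k : rect_wf r0 -> cont_on_rect g r0 ->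
  ra (nested g r0 n) <= ra (nested g r0 (n + k)) /\ rb (nested g r0 (n + k)) <= rb (nested g r0 n) /\
  rc (nested g r0 n) <= rc (nested g r0 (n + k)) /\ rd (nested g r0 (n + k)) <= rd (nested g r0 n).
Proof.
  intros W HC. induction k as [|k IH].
  - rewrite Nat.add_0_r. lra.
  - rewrite Nat.add_succ_r. simpl.
    destruct (nested_props g r0 (n + k) W HC) as [Wn _].
    destruct (worst_quarter_half g _ Wn) as [C1 [C2 [C3 [C4 [C5 C6]]]]]. lra.
Qed.

(* Completeness of R: the nested rectangles have a common point. *)
Lemma nested_common_point g r0 : rect_wf r0 -> cont_on_rect g r0 ->
  exists p, forall n, in_rect (nested g r0 n) p.
Proof.
  intros W HC.
  pose proof (fun n => nested_props g r0 n W HC) as SP.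
  pose proof (fun n k => nested_mono g r0 n k W HC) as SM.
  destruct (completeness (fun x => exists n, x = ra (nested g r0 n))) as [px Hpx].
  { exists (rb r0). intros x [n ->]. destruct (SP n) as [[? ?] [? [? _]]]. lra. }
  { exists (ra r0). exists O. reflexivity. }
  destruct (completeness (fun x => exists n, x = rc (nested g r0 n))) as [py Hpy].
  { exists (rd r0). intros x [n ->]. destruct (SP n) as [[? ?] [? [? [? [? _]]]]]. lra. }
  { exists (rc r0). exists O. reflexivity. }
  exists (px, py). intros n. split; simpl.
  - split.
    + apply (proj1 Hpx). exists n; auto.
    + apply (proj2 Hpx). intros x [k ->].
      destruct (SM k n) as [M1 _]. destruct (SM n k) as [_ [M2 _]].
      destruct (SP (k + n)%nat) as [[? ?] _]. rewrite Nat.add_comm in M2. lra.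
  - split.
    + apply (proj1 Hpy). exists n; auto.
    + apply (proj2 Hpy). intros x [k ->].
      destruct (SM k n) as [_ [_ [M1 _]]]. destruct (SM n k) as [_ [_ [_ M2]]].
      destruct (SP (k + n)%nat) as [[? ?] _]. rewrite Nat.add_comm in M2. lra.
Qed.

Lemma halvings_small (s delta : R) : 0 < delta -> exists n : nat, s / 2 ^ n < delta.
Proof.
  intros Hd.
  destruct (archimed (s / delta)) as [Harch _].
  set (n := Z.to_nat (up (s / delta))).
  assert (Hn : s / delta < INR n).
  { unfold n. destruct (Z.le_gt_cases 0 (up (s / delta))) as [h|h].
    - rewrite INR_IZR_INZ, Z2Nat.id; auto.
    - pose proof (pos_INR (Z.to_nat (up (s / delta)))). apply IZR_lt in h. lra. }
  assert (P2 : INR n + 1 <= 2 ^ n).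
  { clear. induction n as [|n IH]; [simpl; lra|]. rewrite S_INR. simpl.
    assert (1 <= 2 ^ n) by (pose proof (pos_INR n); lra). lra. }
  exists n. assert (P2p : 0 < 2 ^ n) by (apply pow_lt; lra).
  assert (s < INR n * delta).
  { apply Rmult_lt_compat_r with (r := delta) in Hn; auto.
    unfold Rdiv in Hn. rewrite Rmult_assoc, Rinv_l, Rmult_1_r in Hn by lra. exact Hn. }
  apply (Rmult_lt_reg_r (2 ^ n)); auto. unfold Rdiv.
  rewrite Rmult_assoc, Rinv_l, Rmult_1_r by lra. nra.
Qed.

Lemma in_rect_close (r : rect) (z p : C) : in_rect r z -> in_rect r p ->
  Cmod (z - p) <= (rb r - ra r) + (rd r - rc r).
Proof.
  intros [Hzx Hzy] [Hpx Hpy]. eapply Rle_trans. apply Cmod_le_sum.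
  unfold Cminus, Cplus, Copp; simpl. unfold Rabs; repeat destruct Rcase_abs; lra.
Qed.

(* If [g] is within [eps |z - p|] of its tangent map at [p] on the rectangle,
   the boundary integral is O(eps * size^2), the affine part integrating to 0. *)
Lemma rint_tangent_bound (g : C -> C) (r : rect) (p l : C) eps :
  rect_wf r -> cont_on_rect g r -> in_rect r p -> 0 < eps ->
  (forall z, in_rect r z -> Cmod (g z - g p - l * (z - p)) <= eps * Cmod (z - p)) ->
  Cmod (rint g r) <= 2 * (eps * ((rb r - ra r) + (rd r - rc r))) * ((rb r - ra r) + (rd r - rc r)).
Proof.
  intros [Wx Wy] HC Hp He HZ.
  assert (Hbd : forall z, on_bdry (ra r) (rb r) (rc r) (rd r) z -> in_rect r z)
    by (intros z Hz; unfold in_rect, on_bdry in *;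
        destruct Hz as [[? [->| ->]]|[? [->| ->]]]; lra).
  set (aff := fun z => (g p - l * p + l * z)%C).
  assert (BCg : cont_on_bdry g (ra r) (rb r) (rc r) (rd r)) by (intros z Hz; apply HC, Hbd, Hz).
  assert (BCa : cont_on_bdry aff (ra r) (rb r) (rc r) (rd r)).
  { intros z _. eapply cderiv_cont. apply cderiv_affine. }
  assert (Eh : rint g r = rect_int (fun z => g z - aff z)%C (ra r) (rb r) (rc r) (rd r)).
  { rewrite rect_int_minus by auto. unfold aff. rewrite rect_int_affine by auto.
    unfold rint. ring. }
  rewrite Eh. apply rect_int_bound; auto.
  - intros z Hz. apply cont_at_minus; auto.
  - intros z Hz. unfold aff.
    replace (g z - (g p - l * p + l * z))%C with (g z - g p - l * (z - p))%C by ring.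
    pose proof (in_rect_close r z p (Hbd z Hz) Hp).
    eapply Rle_trans. apply HZ, Hbd, Hz. apply Rmult_le_compat_l; lra.
Qed.

(* Quadrisection: a rectangle n halvings deep around a common point p carries
   at least 4^-n of the integral, and at most 2 eps (s/2^n)^2 by the tangent
   estimate at p, once s/2^n is below the radius where that estimate holds. *)
Lemma goursat_estimate (g : C -> C) (r0 : rect) : rect_wf r0 ->
  (forall z, in_rect r0 z -> exists l, cderiv g z l) ->
  forall eps, 0 < eps ->
  Cmod (rint g r0) <= 2 * eps * ((rb r0 - ra r0) + (rd r0 - rc r0)) * ((rb r0 - ra r0) + (rd r0 - rc r0)).
Proof.
  intros W HD eps Heps.
  assert (HC : cont_on_rect g r0).
  { intros z Hz. destruct (HD z Hz) as [l Hl]. eapply cderiv_cont; eauto. }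
  set (s := (rb r0 - ra r0) + (rd r0 - rc r0)).
  destruct (nested_common_point g r0 W HC) as [p Hp].
  destruct (HD p (Hp O)) as [l Hl].
  destruct (Hl eps Heps) as [delta [Hdelta HZ]].
  destruct (halvings_small s delta Hdelta) as [n Hn].
  destruct (nested_props g r0 n W HC) as [Wn [I1 [I2 [I3 [I4 [I5 [I6 I7]]]]]]].
  pose proof (Hp n) as Hpn.
  set (rn := nested g r0 n) in *.
  assert (P2 : 0 < 2 ^ n) by (apply pow_lt; lra).
  assert (Hsum : (rb rn - ra rn) + (rd rn - rc rn) = s / 2 ^ n).
  { rewrite I5, I6. unfold s. field. lra. }
  assert (Bn : Cmod (rint g rn) <= 2 * (eps * (s / 2 ^ n)) * (s / 2 ^ n)).
  { rewrite <- Hsum. apply rint_tangent_bound with (p := p) (l := l); auto.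
    - intros z Hz. apply HC. unfold in_rect in *. lra.
    - intros z Hz. apply HZ. rewrite <- Hsum in Hn.
      pose proof (in_rect_close rn z p Hz Hpn). lra. }
  assert (E4 : 4 ^ n = 2 ^ n * 2 ^ n).
  { replace 4 with (2 * 2) by lra. apply Rpow_mult_distr. }
  assert (Cmod (rint g r0) / 4 ^ n <= 2 * eps * s * s / 4 ^ n).
  { eapply Rle_trans. exact I7. eapply Rle_trans. exact Bn. rewrite E4. right. field. lra. }
  apply Rmult_le_reg_r with (r := / 4 ^ n). apply Rinv_0_lt_compat, pow_lt; lra.
  unfold Rdiv in H. lra.
Qed.

Theorem goursat (g : C -> C) a b c d : a <= b -> c <= d ->
  (forall z, a <= fst z <= b -> c <= snd z <= d -> exists l, cderiv g z l) ->
  rect_int g a b c d = RtoC 0.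
Proof.
  intros Hab Hcd HD. apply Cmod_le_all_pos. intros eta Heta.
  set (s := (b - a) + (d - c)).
  assert (Hs : 0 <= s) by (unfold s; lra).
  set (eps := eta / (2 * (s * s + 1))).
  assert (Heps : 0 < eps) by (unfold eps; apply Rdiv_lt_0_compat; nra).
  pose proof (goursat_estimate g (mkR a b c d) ltac:(split; simpl; lra)
                ltac:(intros z [Hx Hy]; apply HD; auto) eps Heps) as Hest.
  change (Cmod (rect_int g a b c d) <= 2 * eps * s * s) in Hest.
  assert (2 * eps * s * s = eta * (s * s) / (s * s + 1)) by (unfold eps; field; nra).
  assert (eta * (s * s) / (s * s + 1) <= eta).
  { apply (Rmult_le_reg_r (s * s + 1)). nra. unfold Rdiv.
    rewrite Rmult_assoc, Rinv_l by nra. nra. }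
  lra.
Qed.

(** * Deformation and the Cauchy integral formula *)

Definition in_open_rect (a b c d : R) (z : C) := a < fst z < b /\ c < snd z < d.

(* Closes the side conditions "this boundary point avoids the open inner rectangle". *)
Ltac bdry_avoids_inner HC :=
  intros z Hz; apply HC; unfold on_bdry, in_open_rect in *;
  destruct Hz as [[? [Hy| Hy]]|[? [Hx| Hx]]]; try rewrite Hy; try rewrite Hx; try lra;
  intros [[? ?] [? ?]]; lra.

(* A function holomorphic on a rectangle minus an open inner rectangle has the
   same boundary integral over both: the difference splits into four rectangles
   on which Goursat applies. *)
Theorem rect_int_deform (g : C -> C) a b c d a' b' c' d' :
  a <= a' -> a' <= b' -> b' <= b -> c <= c' -> c' <= d' -> d' <= d ->
  (forall z, a <= fst z <= b -> c <= snd z <= d -> ~ in_open_rect a' b' c' d' z ->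
     exists l, cderiv g z l) ->
  rect_int g a b c d = rect_int g a' b' c' d'.
Proof.
  intros h1 h2 h3 h4 h5 h6 HD.
  assert (HC : forall z, a <= fst z <= b -> c <= snd z <= d -> ~ in_open_rect a' b' c' d' z ->
                 cont_at g z).
  { intros z X Y N. destruct (HD z X Y N) as [l Hl]. eapply cderiv_cont; eauto. }
  assert (HG : forall a1 b1 c1 d1, a <= a1 -> a1 <= b1 -> b1 <= b -> c <= c1 -> c1 <= d1 -> d1 <= d ->
     (b1 <= a' \/ b' <= a1 \/ d1 <= c' \/ d' <= c1) -> rect_int g a1 b1 c1 d1 = RtoC 0).
  { intros a1 b1 c1 d1 ? ? ? ? ? ? Hout. apply goursat; try lra.
    intros z X Y. apply HD; try lra. unfold in_open_rect. intros [[? ?] [? ?]]. lra. }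
  rewrite (rect_int_split_x g a a' b c d) by (try lra; bdry_avoids_inner HC).
  rewrite (rect_int_split_x g a' b' b c d) by (try lra; bdry_avoids_inner HC).
  rewrite (rect_int_split_y g a' b' c c' d) by (try lra; bdry_avoids_inner HC).
  rewrite (rect_int_split_y g a' b' c' d' d) by (try lra; bdry_avoids_inner HC).
  rewrite (HG a a' c d), (HG b' b c d), (HG a' b' c c'), (HG a' b' d' d) by lra.
  ring.
Qed.

(* The normalising constant: the boundary integral of 1/z over [-1,1]^2 (it
   equals 2*pi*i; we only use that it is nonzero, through |J0| >= 4). *)
Definition J0 : C := rect_int (fun z => / z)%C (-1) 1 (-1) 1.

Lemma ex_RInt_side : ex_RInt (fun t => 2 / (t ^ 2 + 1)) (-1) 1.
Proof.
  apply (ex_RInt_continuous (V:=R_CompleteNormedModule)). intros z _.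
  apply (ex_derive_continuous (K:=R_AbsRing) (V:=R_NormedModule)). auto_derive. nra.
Qed.

Lemma RInt_side_ge : 2 <= RInt (fun t => 2 / (t ^ 2 + 1)) (-1) 1.
Proof.
  assert (E : RInt (fun _ => 1) (-1) 1 = 2).
  { rewrite RInt_const. unfold scal; simpl; unfold mult; simpl. ring. }
  rewrite <- E at 1. apply RInt_le; [lra| apply ex_RInt_const | apply ex_RInt_side |].
  intros x Hx. apply (Rmult_le_reg_r (x ^ 2 + 1)); [nra|].
  unfold Rdiv. rewrite Rmult_assoc, Rinv_l by nra. nra.
Qed.

(* Opposite sides pair up into real integrals: J0 = 2 i * int_{-1}^{1} 2/(t^2+1) dt. *)
Lemma J0_val : J0 = (0, 2 * RInt (fun t => 2 / (t ^ 2 + 1)) (-1) 1).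
Proof.
  assert (Hne : forall t s : R, s <> 0 -> ((t, s) : C) <> RtoC 0).
  { intros t s Hs E. injection E. intros. lra. }
  assert (Hne' : forall t s : R, t <> 0 -> ((t, s) : C) <> RtoC 0).
  { intros t s Hs E. injection E. intros. lra. }
  unfold J0, rect_int.
  rewrite <- (CInt_minus (fun t => / (t, -1))%C (fun t => / (t, 1))%C).
  2,3: apply ex_CInt_hor; [lra| intros x _; apply cont_at_inv, Hne; lra].
  rewrite <- (CInt_minus (fun t => / (1, t))%C (fun t => / (-1, t))%C).
  2,3: apply ex_CInt_ver; [lra| intros x _; apply cont_at_inv, Hne'; lra].
  rewrite (RInt_ext (V:=C_R_CompleteNormedModule) (fun t => / (t, -1) - / (t, 1))%C
             (fun t => (0, 2 / (t ^ 2 + 1)))).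
  2: { intros x _. unfold Cinv, Cminus, Cplus, Copp; simpl.
       assert (0 < x * (x * 1) + 1) by nra.
       replace (-1 * (-1 * 1)) with 1 by ring. replace (1 * (1 * 1)) with 1 by ring.
       Csplit; field; lra. }
  rewrite (RInt_ext (V:=C_R_CompleteNormedModule) (fun t => / (1, t) - / (-1, t))%C
             (fun t => (2 / (t ^ 2 + 1), 0))).
  2: { intros x _. unfold Cinv, Cminus, Cplus, Copp; simpl.
       assert (0 < x * (x * 1) + 1) by nra.
       replace (-1 * (-1 * 1)) with 1 by ring. replace (1 * (1 * 1)) with 1 by ring.
       assert (E1 : 1 + x * (x * 1) = x * (x * 1) + 1) by ring. rewrite E1.
       Csplit; field; lra. }
  rewrite !CInt_pair; [| apply ex_RInt_side | apply ex_RInt_const | apply ex_RInt_const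
                       | apply ex_RInt_side].
  rewrite RInt_const. unfold scal; simpl; unfold mult; simpl.
  unfold Ci, Cmult, Cplus; Csplit; ring.
Qed.

(* |J0| >= 4; in particular J0 <> 0, so Cauchy's formula can be divided by it. *)
Lemma J0_bound : 4 <= Cmod J0.
Proof.
  eapply Rle_trans; [| apply Cmod_ge_snd]. rewrite J0_val. cbn [snd].
  pose proof RInt_side_ge. rewrite Rabs_right; lra.
Qed.

Lemma J0_neq_0 : J0 <> RtoC 0.
Proof. intros E. pose proof J0_bound. rewrite E, Cmod_0 in H. lra. Qed.

Lemma neq_of_fst (p w : C) : fst p <> fst w -> p <> w.
Proof. intros H E. apply H. rewrite E. reflexivity. Qed.

Lemma neq_of_snd (p w : C) : snd p <> snd w -> p <> w.
Proof. intros H E. apply H. rewrite E. reflexivity. Qed.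

Lemma scaled_inv (s : R) (u q : C) : s <> 0 -> q <> RtoC 0 -> u = (RtoC s * q)%C ->
  (RtoC s * / u)%C = (/ q)%C.
Proof.
  intros Hs Hq ->. field. split; auto. intros E. injection E. auto.
Qed.

Lemma rect_int_kernel_square (w : C) s : 0 < s ->
  rect_int (fun z => / (z - w))%C (fst w - s) (fst w + s) (snd w - s) (snd w + s) = J0.
Proof.
  intros Hs. destruct w as [wx wy]. simpl.
  assert (Hne : forall t s : R, s <> 0 -> ((t, s) : C) <> RtoC 0).
  { intros t s' Hs' E. injection E. intros. lra. }
  assert (Hne' : forall t s : R, t <> 0 -> ((t, s) : C) <> RtoC 0).
  { intros t s' Hs' E. injection E. intros. lra. }
  unfold rect_int, J0.
  rewrite (CInt_rescale (fun t => / ((t, (wy - s)%R) - (wx, wy)))%C (fun y => / (y, (-1)%R))%C s wx Hs).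
  rewrite (CInt_rescale (fun t => / ((t, (wy + s)%R) - (wx, wy)))%C (fun y => / (y, 1%R))%C s wx Hs).
  rewrite (CInt_rescale (fun t => / (((wx + s)%R, t) - (wx, wy)))%C (fun y => / (1%R, y))%C s wy Hs).
  rewrite (CInt_rescale (fun t => / (((wx - s)%R, t) - (wx, wy)))%C (fun y => / ((-1)%R, y))%C s wy Hs).
  1: unfold rect_int; reflexivity.
  all: try (intros y _; apply scaled_inv; [lra| first [apply Hne; lra | apply Hne'; lra] |
             unfold RtoC, Cminus, Cplus, Copp, Cmult; Csplit; ring]).
  all: match goal with
    | |- exC (fun t => (/ ((?x, t) - ?w))%C) ?c ?d =>
        apply (ex_CInt_ver (fun z => / (z - w))%C c d x); [lra|];
        intros y _; apply cont_at_inv_sub, neq_of_fst; simpl; lra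
    | |- exC (fun t => (/ ((t, ?y) - ?w))%C) ?a ?b =>
        apply (ex_CInt_hor (fun z => / (z - w))%C a b y); [lra|];
        intros y' _; apply cont_at_inv_sub, neq_of_snd; simpl; lra
    end.
Qed.

Lemma on_bdry_neq a b c d (w z : C) :
  a < fst w < b -> c < snd w < d -> on_bdry a b c d z -> z <> w.
Proof.
  intros H1 H2 Hz E. subst z. unfold on_bdry in Hz.
  destruct Hz as [[? [E|E]]|[? [E|E]]]; rewrite E in *; lra.
Qed.

Lemma square_margin a b c d (w : C) : a < fst w < b -> c < snd w < d ->
  exists s0, 0 < s0 /\ a <= fst w - s0 /\ fst w + s0 <= b /\ c <= snd w - s0 /\ snd w + s0 <= d.
Proof.
  intros H1 H2.
  exists (Rmin (Rmin (fst w - a) (b - fst w)) (Rmin (snd w - c) (d - snd w)) / 2).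
  pose proof (Rmin_l (Rmin (fst w - a) (b - fst w)) (Rmin (snd w - c) (d - snd w))).
  pose proof (Rmin_r (Rmin (fst w - a) (b - fst w)) (Rmin (snd w - c) (d - snd w))).
  pose proof (Rmin_l (fst w - a) (b - fst w)). pose proof (Rmin_r (fst w - a) (b - fst w)).
  pose proof (Rmin_l (snd w - c) (d - snd w)). pose proof (Rmin_r (snd w - c) (d - snd w)).
  assert (0 < Rmin (Rmin (fst w - a) (b - fst w)) (Rmin (snd w - c) (d - snd w)))
    by (repeat apply Rmin_pos; lra).
  repeat split; lra.
Qed.

Lemma rect_int_kernel a b c d (w : C) : a < fst w < b -> c < snd w < d ->
  rect_int (fun z => / (z - w))%C a b c d = J0.
Proof.
  intros Hw1 Hw2. destruct (square_margin a b c d w Hw1 Hw2) as [s0 [Hs0 Hm]].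
  rewrite (rect_int_deform _ a b c d (fst w - s0) (fst w + s0) (snd w - s0) (snd w + s0))
    by (try lra; intros z _ _ N; eexists; apply cderiv_inv_sub;
        intros E; apply N; rewrite E; unfold in_open_rect; lra).
  apply (rect_int_kernel_square w s0 Hs0).
Qed.

(* The difference quotient (f z - f w)/(z - w) integrates to 0: deform onto
   arbitrarily small squares around w, on which it stays bounded. *)
Lemma rect_int_dq_vanishes (f : C -> C) a b c d (w : C) :
  a < fst w < b -> c < snd w < d ->
  (forall z, a <= fst z <= b -> c <= snd z <= d -> exists l, cderiv f z l) ->
  rect_int (fun z => (f z - f w) * / (z - w))%C a b c d = RtoC 0.
Proof.
  intros Hw1 Hw2 HD.
  set (phi := fun z => ((f z - f w) * / (z - w))%C).
  assert (Dphi : forall z, a <= fst z <= b -> c <= snd z <= d -> z <> w -> exists l, cderiv phi z l).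
  { intros z X Y N. destruct (HD z X Y) as [l Hl]. eexists.
    apply (cderiv_mult (fun z => f z - f w)%C (fun z => / (z - w))%C).
    - apply (cderiv_minus f (fun _ => f w)). exact Hl. apply cderiv_const.
    - apply cderiv_inv_sub. exact N. }
  destruct (square_margin a b c d w Hw1 Hw2) as [s0 [Hs0 Hm]].
  destruct (HD w ltac:(lra) ltac:(lra)) as [lw Hlw].
  destruct (cderiv_lipschitz f w lw Hlw) as [d1 [Hd1 Hb1]].
  apply Cmod_le_all_pos. intros eta Heta.
  set (K := Cmod lw + 1). assert (HK : 0 < K) by (unfold K; pose proof (Cmod_ge_0 lw); lra).
  set (s := Rmin s0 (Rmin (d1 / 4) (eta / (8 * K)))).
  assert (Hs : 0 < s) by (unfold s; repeat apply Rmin_pos; try lra; apply Rdiv_lt_0_compat; lra).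
  assert (Hs1 : s <= s0) by apply Rmin_l.
  assert (Hs2 : s <= d1 / 4) by (eapply Rle_trans; [apply Rmin_r| apply Rmin_l]).
  assert (Hs3 : s <= eta / (8 * K)) by (eapply Rle_trans; [apply Rmin_r| apply Rmin_r]).
  assert (Hon : forall z, on_bdry (fst w - s) (fst w + s) (snd w - s) (snd w + s) z ->
     a <= fst z <= b /\ c <= snd z <= d /\ z <> w /\ Cmod (z - w) <= 2 * s).
  { intros z Hz. repeat split; try (unfold on_bdry in Hz; lra).
    - apply (on_bdry_neq (fst w - s) (fst w + s) (snd w - s) (snd w + s)); auto; lra.
    - apply in_square_close; unfold on_bdry in Hz; lra. }
  rewrite (rect_int_deform _ a b c d (fst w - s) (fst w + s) (snd w - s) (snd w + s)).
  2-7: lra.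
  2: { intros z X Y N. apply Dphi; auto. intros E. apply N. rewrite E. unfold in_open_rect. lra. }
  eapply Rle_trans. apply rect_int_bound with (M := K); try lra.
  - intros z Hz. destruct (Hon z Hz) as [X [Y [N _]]].
    destruct (Dphi z X Y N) as [l Hl]. eapply cderiv_cont; eauto.
  - intros z Hz. destruct (Hon z Hz) as [_ [_ [Nz Dzw]]].
    pose proof (Hb1 z ltac:(lra)) as Bz.
    unfold phi. rewrite Cmod_mult, Cmod_inv by (apply Cminus_neq_0; auto).
    assert (Pz : 0 < Cmod (z - w)) by (apply Cmod_gt_0, Cminus_neq_0; auto).
    apply (Rmult_le_reg_r (Cmod (z - w))); auto.
    rewrite Rmult_assoc, Rinv_l, Rmult_1_r by lra. fold K in Bz. lra.
  - assert (8 * K * s <= eta).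
    { apply Rmult_le_compat_l with (r := 8 * K) in Hs3; [|lra].
      replace (8 * K * (eta / (8 * K))) with eta in Hs3 by (field; lra). lra. }
    lra.
Qed.

(* Cauchy's integral formula for a rectangle, normalised by J0 instead of 2*pi*i. *)
Theorem cauchy_formula_rect (f : C -> C) a b c d (w : C) :
  a < fst w < b -> c < snd w < d ->
  (forall z, a <= fst z <= b -> c <= snd z <= d -> exists l, cderiv f z l) ->
  rect_int (fun z => f z / (z - w))%C a b c d = (f w * J0)%C.
Proof.
  intros Hw1 Hw2 HD.
  assert (Nw : forall z, on_bdry a b c d z -> z <> w) by (intros; apply (on_bdry_neq a b c d); auto).
  assert (BCphi : cont_on_bdry (fun z => (f z - f w) * / (z - w))%C a b c d).
  { intros z Hz. destruct (HD z) as [l Hl]; try (unfold on_bdry in Hz; lra).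
    apply cont_at_mult; [apply cont_at_minus; [eapply cderiv_cont; eauto| apply cont_at_const]|].
    apply cont_at_inv_sub, Nw, Hz. }
  assert (BCk : cont_on_bdry (fun z => f w * / (z - w))%C a b c d).
  { intros z Hz. apply cont_at_mult; [apply cont_at_const| apply cont_at_inv_sub, Nw, Hz]. }
  rewrite (rect_int_ext _ (fun z => (f z - f w) * / (z - w) + f w * / (z - w))%C)
    by (try lra; intros z Hz; field; apply Cminus_neq_0, Nw, Hz).
  rewrite rect_int_plus by (auto; lra).
  rewrite rect_int_scal by (try lra; intros z Hz; apply cont_at_inv_sub, Nw, Hz).
  rewrite rect_int_dq_vanishes, rect_int_kernel by auto. ring.
Qed.

(** * Cauchy estimates on squares *)

Definition sq_int (g : C -> C) (c : C) (r : R) : C :=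
  rect_int g (fst c - r) (fst c + r) (snd c - r) (snd c + r).

Definition on_sq (c : C) (r : R) (z : C) := on_bdry (fst c - r) (fst c + r) (snd c - r) (snd c + r) z.

Definition cauchy_formula_at (g : C -> C) (c : C) (r : R) (w : C) : Prop :=
  sq_int (fun z => g z * / (z - w))%C c r = (g w * J0)%C.

Definition cauchy_deriv (g : C -> C) (c : C) (r : R) : C :=
  (sq_int (fun z => g z * (/ (z - c) * / (z - c)))%C c r / J0)%C.

Definition dq (g : C -> C) (c w : C) : C := ((g w - g c) / (w - c))%C.

Lemma on_sq_far (c z : C) r : 0 < r -> on_sq c r z -> r <= Cmod (z - c).
Proof.
  intros Hr Hz. destruct c as [cx cy], z as [zx zy]. unfold on_sq, on_bdry in Hz; simpl in Hz.
  destruct Hz as [[_ [E|E]]|[_ [E|E]]]; subst.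
  - eapply Rle_trans; [|apply Cmod_ge_snd]. unfold Cminus, Cplus, Copp; simpl.
    rewrite Rabs_left by lra. lra.
  - eapply Rle_trans; [|apply Cmod_ge_snd]. unfold Cminus, Cplus, Copp; simpl.
    rewrite Rabs_right by lra. lra.
  - eapply Rle_trans; [|apply Cmod_ge_fst]. unfold Cminus, Cplus, Copp; simpl.
    rewrite Rabs_left by lra. lra.
  - eapply Rle_trans; [|apply Cmod_ge_fst]. unfold Cminus, Cplus, Copp; simpl.
    rewrite Rabs_right by lra. lra.
Qed.

Lemma on_sq_close (z c : C) r : 0 <= r -> on_sq c r z -> Cmod (z - c) <= 2 * r.
Proof. intros Hr Hz. apply in_square_close; unfold on_sq, on_bdry in Hz; lra. Qed.

Lemma on_sq_far_inner (c w z : C) r : 0 < r -> Cmod (w - c) < r / 2 -> on_sq c r z ->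
  r / 2 <= Cmod (z - w).
Proof.
  intros Hr Hw Hz. pose proof (on_sq_far c z r Hr Hz).
  pose proof (Cmod_sub_triangle c w z). lra.
Qed.

Lemma inv_Cmod_le (u : C) (t : R) : 0 < t -> t <= Cmod u -> Cmod (/ u) <= / t.
Proof.
  intros Ht Hu. assert (Hu0 : u <> RtoC 0) by (intros E; rewrite E, Cmod_0 in Hu; lra).
  rewrite Cmod_inv by exact Hu0. apply Rinv_le_contravar; auto.
Qed.

Lemma inner_neq (c w z : C) r : 0 < r -> Cmod (w - c) < r / 2 -> on_sq c r z ->
  (z - w)%C <> RtoC 0.
Proof.
  intros Hr Hw Hz E. pose proof (on_sq_far_inner c w z r Hr Hw Hz). rewrite E, Cmod_0 in H. lra.
Qed.

Lemma cauchy_formula_of_cderiv (g : C -> C) (c : C) r : 0 < r ->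
  (forall z, fst c - r <= fst z <= fst c + r -> snd c - r <= snd z <= snd c + r ->
     exists l, cderiv g z l) ->
  forall w, Cmod (w - c) < r -> cauchy_formula_at g c r w.
Proof.
  intros Hr HD w Hw. unfold cauchy_formula_at, sq_int.
  pose proof (Cmod_ge_fst (w - c)) as F1. pose proof (Cmod_ge_snd (w - c)) as F2.
  destruct w as [wx wy], c as [cx cy]. simpl in *.
  unfold Rabs in F1, F2. destruct Rcase_abs in F1; destruct Rcase_abs in F2;
  apply cauchy_formula_rect; simpl; auto; lra.
Qed.

Lemma cauchy_formula_limit (g : C -> C) (c : C) r w : 0 < r -> Cmod (w - c) < r / 2 ->
  (forall z, on_sq c r z -> cont_at g z) ->
  (forall eps, 0 < eps -> exists h, (forall z, on_sq c r z -> cont_at h z) /\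
      cauchy_formula_at h c r w /\
      Cmod (h w - g w) <= eps /\ forall z, on_sq c r z -> Cmod (h z - g z) <= eps) ->
  cauchy_formula_at g c r w.
Proof.
  intros Hr Hw HC HL. unfold cauchy_formula_at, sq_int.
  assert (Hab : fst c - r <= fst c + r) by lra. assert (Hcd : snd c - r <= snd c + r) by lra.
  cut ((rect_int (fun z => g z * / (z - w))%C (fst c - r) (fst c + r) (snd c - r) (snd c + r)
        - g w * J0)%C = RtoC 0).
  { intros E. replace (g w * J0)%C with (RtoC 0 + g w * J0)%C by ring. rewrite <- E. ring. }
  apply Cmod_le_all_pos. intros eta Heta.
  pose proof J0_bound as HJ.
  set (eps := eta / (16 + Cmod J0)).
  assert (He : 0 < eps) by (unfold eps; apply Rdiv_lt_0_compat; lra).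
  destruct (HL eps He) as [h [Hh1 [Hh2 [Hh3 Hh4]]]].
  unfold cauchy_formula_at, sq_int in Hh2.
  assert (BC : forall k : C -> C, (forall z, on_sq c r z -> cont_at k z) ->
            cont_on_bdry (fun z => k z * / (z - w))%C (fst c - r) (fst c + r) (snd c - r) (snd c + r)).
  { intros k Hk z Hz. apply cont_at_mult. apply Hk, Hz. apply cont_at_inv_sub.
    intros Ez. apply (inner_neq c w z r Hr Hw Hz). rewrite Ez. ring. }
  replace (rect_int (fun z => g z * / (z - w))%C (fst c - r) (fst c + r) (snd c - r) (snd c + r)
           - g w * J0)%C
    with ((rect_int (fun z => g z * / (z - w))%C (fst c - r) (fst c + r) (snd c - r) (snd c + r)
         - rect_int (fun z => h z * / (z - w))%C (fst c - r) (fst c + r) (snd c - r) (snd c + r))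
         + (h w - g w) * J0)%C
    by (rewrite Hh2; ring).
  rewrite <- rect_int_minus by auto.
  eapply Rle_trans. apply Cmod_triangle. rewrite Cmod_mult.
  assert (B1 : Cmod (rect_int (fun z => g z * / (z - w) - h z * / (z - w))%C
                       (fst c - r) (fst c + r) (snd c - r) (snd c + r))
     <= 2 * (eps * / (r / 2)) * ((fst c + r - (fst c - r)) + (snd c + r - (snd c - r)))).
  { apply rect_int_bound; auto.
    - intros z Hz. apply cont_at_minus; [apply BC| apply BC]; auto.
    - intros z Hz.
      replace (g z * / (z - w) - h z * / (z - w))%C with ((g z - h z) * / (z - w))%C by ring.
      rewrite Cmod_mult. rewrite Cmod_sub_sym.
      apply Rmult_le_compat; auto using Cmod_ge_0.
      apply inv_Cmod_le; [lra|]. apply (on_sq_far_inner c w z r Hr Hw Hz). }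
  replace (2 * (eps * / (r / 2)) * ((fst c + r - (fst c - r)) + (snd c + r - (snd c - r))))
    with (16 * eps) in B1 by (field; lra).
  assert (eps * (16 + Cmod J0) = eta) by (unfold eps; field; lra).
  assert (Cmod (h w - g w) * Cmod J0 <= eps * Cmod J0)
    by (apply Rmult_le_compat_r; [apply Cmod_ge_0| auto]).
  lra.
Qed.

Lemma cont_at_kernel (c u z : C) r : 0 < r -> Cmod (u - c) < r / 2 -> on_sq c r z ->
  cont_at (fun z => / (z - u))%C z.
Proof.
  intros Hr Hu Hz. apply cont_at_inv_sub. intros E.
  apply (inner_neq c u z r Hr Hu Hz). rewrite E. ring.
Qed.

(* The remainder kernel: dq g c w - cauchy_deriv g c r is its integral / J0. *)
Definition dq_kernel (g : C -> C) (c w z : C) : C :=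
  (g z * ((w - c) * (/ (z - w) * (/ (z - c) * / (z - c)))))%C.

Lemma dq_kernel_cont (g : C -> C) (c w : C) r : 0 < r -> Cmod (w - c) < r / 2 ->
  (forall z, on_sq c r z -> cont_at g z) ->
  cont_on_bdry (dq_kernel g c w) (fst c - r) (fst c + r) (snd c - r) (snd c + r).
Proof.
  intros Hr Hw HC z Hz. assert (Hc : Cmod (c - c) < r / 2) by (rewrite Cmod_sub_diag; lra).
  apply cont_at_mult; [apply HC, Hz|]. apply cont_at_mult; [apply cont_at_const|].
  apply cont_at_mult; [| apply cont_at_mult]; eapply cont_at_kernel; eauto.
Qed.

Lemma dq_kernel_bound (g : C -> C) (c w z : C) r M : 0 < r -> Cmod (w - c) < r / 2 ->
  on_sq c r z -> Cmod (g z) <= M ->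
  Cmod (dq_kernel g c w z) <= 2 * M * Cmod (w - c) / (r * r * r).
Proof.
  intros Hr Hw Hz HM. unfold dq_kernel.
  assert (Iw : Cmod (/ (z - w)) <= / (r / 2))
    by (apply inv_Cmod_le; [lra| apply (on_sq_far_inner c w z r Hr Hw Hz)]).
  assert (Ic : Cmod (/ (z - c)) <= / r) by (apply inv_Cmod_le; [lra| apply (on_sq_far c z r Hr Hz)]).
  rewrite !Cmod_mult.
  pose proof (Cmod_ge_0 (g z)). pose proof (Cmod_ge_0 (w - c)).
  pose proof (Cmod_ge_0 (/ (z - w))). pose proof (Cmod_ge_0 (/ (z - c))).
  replace (2 * M * Cmod (w - c) / (r * r * r)) with (M * (Cmod (w - c) * (/ (r / 2) * (/ r * / r))))
    by (field; lra).
  apply Rmult_le_compat; auto; [apply Rmult_le_pos; auto; apply Rmult_le_pos; auto; nra|].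
  apply Rmult_le_compat_l; auto.
  apply Rmult_le_compat; auto; [nra|].
  apply Rmult_le_compat; auto.
Qed.

(* Subtracting Cauchy's formulas at w and at c: by the partial fraction identity
   1/(z-w) - 1/(z-c) - (w-c)/(z-c)^2 = (w-c)^2 / ((z-w)(z-c)^2). *)
Lemma dq_remainder (g : C -> C) (c w : C) r : 0 < r -> 0 < Cmod (w - c) < r / 2 ->
  (forall z, on_sq c r z -> cont_at g z) ->
  cauchy_formula_at g c r w -> cauchy_formula_at g c r c ->
  (dq g c w - cauchy_deriv g c r)%C = (sq_int (dq_kernel g c w) c r / J0)%C.
Proof.
  intros Hr Hw HC Hw' Hc'.
  assert (Hwc : (w - c)%C <> RtoC 0) by (intros E; rewrite E, Cmod_0 in Hw; lra).
  assert (Hc0 : Cmod (c - c) < r / 2) by (rewrite Cmod_sub_diag; lra).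
  assert (BC4 := dq_kernel_cont g c w r Hr ltac:(lra) HC).
  unfold cauchy_formula_at, cauchy_deriv, dq, sq_int in *.
  set (a := fst c - r) in *. set (b := fst c + r) in *.
  set (c' := snd c - r) in *. set (d := snd c + r) in *.
  assert (Hab : a <= b) by (unfold a, b; lra). assert (Hcd : c' <= d) by (unfold c', d; lra).
  set (g1 := fun z => (g z * / (z - w))%C) in *.
  set (g2 := fun z => (g z * / (z - c))%C) in *.
  set (g3 := fun z => (g z * (/ (z - c) * / (z - c)))%C) in *.
  assert (BC1 : cont_on_bdry g1 a b c' d)
    by (intros z Hz; apply cont_at_mult; [apply HC, Hz| eapply cont_at_kernel; eauto; lra]).
  assert (BC2 : cont_on_bdry g2 a b c' d)
    by (intros z Hz; apply cont_at_mult; [apply HC, Hz| eapply cont_at_kernel; eauto]).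
  assert (BC3 : cont_on_bdry g3 a b c' d)
    by (intros z Hz; apply cont_at_mult; [apply HC, Hz| apply cont_at_mult; eapply cont_at_kernel; eauto]).
  assert (Key : (rect_int g1 a b c' d - rect_int g2 a b c' d - (w - c) * rect_int g3 a b c' d)%C
                = ((w - c) * rect_int (dq_kernel g c w) a b c' d)%C).
  { rewrite <- (rect_int_scal g3 (w - c)), <- (rect_int_minus g1 g2),
      <- (rect_int_scal (dq_kernel g c w) (w - c)) by auto.
    rewrite <- (rect_int_minus (fun z => g1 z - g2 z)%C (fun z => (w - c) * g3 z)%C) by
      (auto; intros z Hz;
       first [apply cont_at_minus; [apply BC1| apply BC2]; exact Hz
             | apply cont_at_mult; [apply cont_at_const| apply BC3; exact Hz]]).
    apply rect_int_ext; auto. intros z Hz.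
    pose proof (inner_neq c w z r Hr ltac:(lra) Hz). pose proof (inner_neq c c z r Hr Hc0 Hz).
    unfold g1, g2, g3, dq_kernel. field. auto. }
  pose proof J0_neq_0. rewrite Hw', Hc' in Key.
  transitivity (((g w * J0 - g c * J0) - (w - c) * rect_int g3 a b c' d) / ((w - c) * J0))%C.
  { field. split; auto. }
  rewrite Key. field. split; auto.
Qed.

Theorem cauchy_dq_estimate (g : C -> C) (c : C) r M : 0 < r ->
  (forall z, on_sq c r z -> cont_at g z) ->
  (forall z, on_sq c r z -> Cmod (g z) <= M) ->
  (forall w, Cmod (w - c) < r / 2 -> cauchy_formula_at g c r w) ->
  forall w, 0 < Cmod (w - c) < r / 2 ->
  Cmod (dq g c w - cauchy_deriv g c r) <= 4 * M * Cmod (w - c) / (r * r).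
Proof.
  intros Hr HC HM HCIF w Hw.
  assert (Hc0 : Cmod (c - c) < r / 2) by (rewrite Cmod_sub_diag; lra).
  rewrite (dq_remainder g c w r Hr Hw HC (HCIF w ltac:(lra)) (HCIF c Hc0)).
  assert (BE : Cmod (sq_int (dq_kernel g c w) c r) <= 16 * M * Cmod (w - c) / (r * r)).
  { eapply Rle_trans.
    - apply (rect_int_bound _ _ _ _ _ (2 * M * Cmod (w - c) / (r * r * r))); try lra.
      + apply dq_kernel_cont; auto; lra.
      + intros z Hz. apply dq_kernel_bound; auto; lra.
    - right. field. lra. }
  pose proof J0_neq_0. pose proof J0_bound.
  rewrite Cmod_div by auto.
  set (S0 := Cmod (sq_int (dq_kernel g c w) c r)) in *.
  assert (0 <= S0) by apply Cmod_ge_0.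
  assert (S0 / Cmod J0 <= S0 / 4)
    by (unfold Rdiv; apply Rmult_le_compat_l; auto; apply Rinv_le_contravar; lra).
  assert (S0 / 4 <= 4 * M * Cmod (w - c) / (r * r)).
  { replace (4 * M * Cmod (w - c) / (r * r)) with ((16 * M * Cmod (w - c) / (r * r)) / 4)
      by (field; lra).
    unfold Rdiv at 1 2. lra. }
  lra.
Qed.

Lemma cauchy_deriv_bound (g : C -> C) (c : C) r M : 0 < r ->
  (forall z, on_sq c r z -> cont_at g z) -> (forall z, on_sq c r z -> Cmod (g z) <= M) ->
  Cmod (cauchy_deriv g c r) <= 2 * M / r.
Proof.
  intros Hr HC HM.
  assert (Ic : forall z, on_sq c r z -> Cmod (/ (z - c)) <= / r)
    by (intros z Hz; apply inv_Cmod_le; [lra| apply (on_sq_far c z r Hr Hz)]).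
  assert (Nc : forall z, on_sq c r z -> z <> c).
  { intros z Hz E. pose proof (on_sq_far c z r Hr Hz). rewrite E, Cmod_sub_diag in H. lra. }
  unfold cauchy_deriv, sq_int. pose proof J0_neq_0. pose proof J0_bound.
  rewrite Cmod_div by auto.
  assert (B : Cmod (rect_int (fun z => g z * (/ (z - c) * / (z - c)))%C
                      (fst c - r) (fst c + r) (snd c - r) (snd c + r))
              <= 2 * (M * (/ r * / r)) * ((fst c + r - (fst c - r)) + (snd c + r - (snd c - r)))).
  { apply rect_int_bound; try lra.
    - intros z Hz. apply cont_at_mult; [apply HC, Hz|].
      apply cont_at_mult; apply cont_at_inv_sub, Nc, Hz.
    - intros z Hz. rewrite !Cmod_mult. pose proof (Ic z Hz).
      pose proof (Cmod_ge_0 (/ (z - c))). pose proof (Cmod_ge_0 (g z)).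
      apply Rmult_le_compat; auto; [apply Rmult_le_pos; auto|].
      apply Rmult_le_compat; auto. }
  replace (2 * (M * (/ r * / r)) * ((fst c + r - (fst c - r)) + (snd c + r - (snd c - r))))
    with (8 * M / r) in B by (field; lra).
  set (S0 := Cmod (rect_int _ _ _ _ _)) in *.
  assert (0 <= S0) by apply Cmod_ge_0.
  assert (S0 / Cmod J0 <= S0 / 4)
    by (unfold Rdiv; apply Rmult_le_compat_l; auto; apply Rinv_le_contravar; lra).
  assert (S0 / 4 <= 2 * M / r)
    by (replace (2 * M / r) with ((8 * M / r) / 4) by (field; lra); unfold Rdiv at 1 2; lra).
  lra.
Qed.

(* Cauchy estimate for a function holomorphic on the closed disc of radius 2r
   (which contains the closed square of half-side r). *)
Lemma cauchy_estimate (g : C -> C) (c : C) r M : 0 < r ->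
  (forall z, Cmod (z - c) <= 2 * r -> exists l, cderiv g z l) ->
  (forall z, Cmod (z - c) <= 2 * r -> Cmod (g z) <= M) ->
  forall w, 0 < Cmod (w - c) < r / 2 ->
  Cmod (dq g c w - cauchy_deriv g c r) <= 4 * M * Cmod (w - c) / (r * r).
Proof.
  intros Hr HD HM. apply cauchy_dq_estimate; auto.
  - intros z Hz. destruct (HD z (on_sq_close z c r ltac:(lra) Hz)) as [l Hl].
    eapply cderiv_cont; eauto.
  - intros z Hz. apply HM, on_sq_close; auto; lra.
  - intros w Hw. apply cauchy_formula_of_cderiv; auto; [| lra].
    intros z H1 H2. apply HD, in_square_close; auto.
Qed.

Lemma linear_bound_small (K rho eps : R) : 0 < rho -> 0 < eps ->
  exists delta, 0 < delta /\ delta <= rho /\ forall t, 0 <= t < delta -> K * t < eps.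
Proof.
  intros Hrho He. exists (Rmin rho (eps / (Rabs K + 1))).
  pose proof (Rabs_pos K). pose proof (Rle_abs K).
  pose proof (Rmin_l rho (eps / (Rabs K + 1))). pose proof (Rmin_r rho (eps / (Rabs K + 1))).
  repeat split; auto.
  - apply Rmin_pos; auto. apply Rdiv_lt_0_compat; lra.
  - intros t Ht.
    assert (Ht' : t < eps / (Rabs K + 1)) by lra.
    apply (Rmult_lt_compat_r (Rabs K + 1)) in Ht'; [|lra].
    unfold Rdiv in Ht'. rewrite Rmult_assoc, Rinv_l, Rmult_1_r in Ht' by lra.
    nra.
Qed.

(* A uniform limit of functions continuous at [x] is continuous at [x];
   [near d y] expresses that [y] lies within [d] of [x]. *)
Lemma uniform_limit_cont {X : Type} (D : X -> Prop) (near : R -> X -> Prop) (g : X -> C) (x : X) :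
  D x ->
  (forall eps, 0 < eps -> exists h : X -> C, (forall y, D y -> Cmod (h y - g y) <= eps) /\
     exists d, 0 < d /\ forall y, D y -> near d y -> Cmod (h y - h x) <= eps) ->
  forall eps, 0 < eps -> exists d, 0 < d /\ forall y, D y -> near d y -> Cmod (g y - g x) < eps.
Proof.
  intros Dx HL eps He.
  destruct (HL (eps / 4) ltac:(lra)) as [h [Hh [d [Hd Hc]]]].
  exists d. split; auto. intros y Dy Hy.
  pose proof (Hh y Dy). pose proof (Hh x Dx). pose proof (Hc y Dy Hy).
  replace (g y - g x)%C with (- (h y - g y) + (h y - h x) + (h x - g x))%C by ring.
  eapply Rle_lt_trans. apply Cmod_triangle.
  eapply Rle_lt_trans. apply Rplus_le_compat_r. apply Cmod_triangle.
  rewrite Cmod_opp. lra.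
Qed.

Definition dq_limit (g : C -> C) (c l : C) : Prop :=
  forall eps, 0 < eps -> exists delta, 0 < delta /\
    forall w, 0 < Cmod (w - c) < delta -> Cmod (dq g c w - l) < eps.

(* Cauchy's formula passes to the limit,
   and then the Cauchy estimate applies to the limit itself. *)
Theorem uniform_limit_differentiable (g : C -> C) (z0 : C) (R0 M : R) : 0 < R0 ->
  (forall z, Cmod (z - z0) < R0 -> Cmod (g z) <= M) ->
  (forall eps, 0 < eps -> exists h : C -> C,
     (forall z, Cmod (z - z0) < R0 -> exists l, cderiv h z l) /\
     (forall z, Cmod (z - z0) < R0 -> Cmod (h z - g z) <= eps)) ->
  exists l, dq_limit g z0 l.
Proof.
  intros HR HM HL.
  set (s := R0 / 4). assert (Hs : 0 < s) by (unfold s; lra).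
  assert (Hsq : forall z, on_sq z0 s z -> Cmod (z - z0) < R0)
    by (intros z Hz; pose proof (on_sq_close z z0 s ltac:(lra) Hz); unfold s in *; lra).
  assert (HC : forall z, Cmod (z - z0) <= 2 * s -> cont_at g z).
  { intros z Hz eps He.
    destruct (uniform_limit_cont (fun y => Cmod (y - z0) < R0) (fun d y => Cmod (y - z) < d)
                g z ltac:(unfold s in Hz; lra)) with (eps := eps) as [d [Hd Hc]]; auto.
    - intros e He'. destruct (HL e He') as [h [Hh1 Hh2]]. exists h. split; auto.
      destruct (Hh1 z ltac:(unfold s in Hz; lra)) as [l Hl].
      destruct (cderiv_cont h z l Hl e He') as [d [Hd Hc]].
      exists d. split; auto. intros y _ Hy. apply Rlt_le, Hc, Hy.
    - exists (Rmin d (2 * s)). split; [apply Rmin_pos; lra|]. intros y Hy.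
      pose proof (Rmin_l d (2 * s)). pose proof (Rmin_r d (2 * s)).
      apply Hc; [| lra]. pose proof (Cmod_sub_triangle z0 z y). unfold s in *. lra. }
  exists (cauchy_deriv g z0 s).
  assert (Hest : forall w, 0 < Cmod (w - z0) < s / 2 ->
            Cmod (dq g z0 w - cauchy_deriv g z0 s) <= 4 * M * Cmod (w - z0) / (s * s)).
  { apply cauchy_dq_estimate; auto.
    - intros z Hz. apply HC, on_sq_close; auto; lra.
    - intros w Hw. apply cauchy_formula_limit; auto.
      + intros z Hz. apply HC, on_sq_close; auto; lra.
      + intros eps He. destruct (HL eps He) as [h [Hh1 Hh2]]. exists h. repeat split.
        * intros z Hz. destruct (Hh1 z (Hsq z Hz)) as [l Hl]. eapply cderiv_cont; eauto.
        * apply cauchy_formula_of_cderiv; auto; [| lra].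
          intros z H1 H2. apply Hh1. pose proof (in_square_close z z0 s H1 H2). unfold s in *. lra.
        * apply Hh2. unfold s in *. lra.
        * intros z Hz. apply Hh2, Hsq, Hz. }
  intros eps He.
  destruct (linear_bound_small (4 * M / (s * s)) (s / 2) eps ltac:(lra) He) as [d [Hd [Hds Hsm]]].
  exists d. split; auto. intros w Hw.
  eapply Rle_lt_trans. apply Hest; lra.
  replace (4 * M * Cmod (w - z0) / (s * s)) with (4 * M / (s * s) * Cmod (w - z0)) by (field; lra).
  apply Hsm. lra.
Qed.

(** * Compactness *)

Lemma finite_subcover {X : Type} (ball : X -> R -> X -> Prop) (K : X -> Prop) :
  compact_in ball K ->
  (forall x y z rho, 0 < rho -> ball x (rho / 2) y -> ball y (rho / 2) z -> ball x rho z) ->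
  (forall x rho, 0 < rho -> ball x rho x) ->
  forall (P : X -> R -> Prop), (forall x, K x -> exists r, 0 < r /\ P x r) ->
  exists l : list (X * R), (forall q, In q l -> K (fst q) /\ 0 < snd q /\ P (fst q) (snd q)) /\
    forall z, K z -> exists q, In q l /\ ball (fst q) (snd q) z.
Proof.
  intros hK tri refl P HP.
  set (I := {q : X * R | K (fst q) /\ 0 < snd q /\ P (fst q) (snd q)}).
  set (U := fun (i : I) (z : X) => exists rho, 0 < rho /\
              forall z', ball z rho z' -> ball (fst (proj1_sig i)) (snd (proj1_sig i)) z').
  destruct (hK I U) as [l Hl].
  - intros i x [rho [Hr Hx]]. exists (rho / 2). split; [lra|].
    intros y Hy. exists (rho / 2). split; [lra|]. intros z' Hz'.
    apply Hx. apply (tri x y z' rho Hr Hy Hz').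
  - intros z Kz. destruct (HP z Kz) as [r [Hr Pr]].
    exists (exist _ (z, r) (conj Kz (conj Hr Pr))). exists r. split; auto.
  - exists (map (@proj1_sig _ _) l). split.
    + intros q Hq. apply in_map_iff in Hq. destruct Hq as [i [<- _]]. exact (proj2_sig i).
    + intros z Kz. destruct (Hl z Kz) as [i [Hi [rho [Hr Hz]]]].
      exists (proj1_sig i). split. apply in_map; auto. apply Hz, refl, Hr.
Qed.

Lemma list_min_pos {A : Type} (l : list (A * R)) : (forall q, In q l -> 0 < snd q) ->
  exists d, 0 < d /\ forall q, In q l -> d <= snd q.
Proof.
  induction l as [|q l IH]; intros H.
  - exists 1. split; [lra|]. intros q [].
  - destruct IH as [d [Hd Hq]]. { intros q' Hq'. apply H. right; auto. }
    exists (Rmin (snd q) d). split. apply Rmin_pos; auto. apply H; left; auto.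
    intros q' [<-|Hq']. apply Rmin_l. eapply Rle_trans. apply Rmin_r. auto.
Qed.

Lemma list_max_bound {A : Type} (l : list A) (Q : A -> R -> Prop) :
  (forall q, In q l -> exists M, Q q M) ->
  exists M, forall q, In q l -> exists M', Q q M' /\ M' <= M.
Proof.
  induction l as [|q l IH]; intros H.
  - exists 0. intros q [].
  - destruct IH as [M HM]. { intros q' Hq'. apply H. right; auto. }
    destruct (H q (or_introl eq_refl)) as [Mq HMq].
    exists (Rmax Mq M). intros q' [<-|Hq'].
    + exists Mq. split; auto. apply Rmax_l.
    + destruct (HM q' Hq') as [M' [H1 H2]]. exists M'. split; auto.
      eapply Rle_trans. exact H2. apply Rmax_r.
Qed.

Lemma ballC_half_triangle x y z rho : 0 < rho ->
  ballC x (rho / 2) y -> ballC y (rho / 2) z -> ballC x rho z.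
Proof.
  intros _ H1 H2. change (Cmod (y - x) < rho / 2) in H1. change (Cmod (z - y) < rho / 2) in H2.
  change (Cmod (z - x) < rho). pose proof (Cmod_sub_triangle x y z). lra.
Qed.

Lemma ballC_center x rho : 0 < rho -> ballC x rho x.
Proof. unfold ballC. intros Hr. change (Cmod (x - x) < rho). rewrite Cmod_sub_diag. lra. Qed.

Lemma ballV_half_triangle {n : nat} (x y z : Vec n) rho : 0 < rho ->
  ballV x (rho / 2) y -> ballV y (rho / 2) z -> ballV x rho z.
Proof.
  intros Hr H1 H2 i. specialize (H1 i). specialize (H2 i).
  change (Cmod (y i - x i) < rho / 2) in H1. change (Cmod (z i - y i) < rho / 2) in H2.
  change (Cmod (z i - x i) < rho). pose proof (Cmod_sub_triangle (x i) (y i) (z i)). lra.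
Qed.

Lemma ballV_center {n : nat} (x : Vec n) rho : 0 < rho -> ballV x rho x.
Proof. unfold ballV. intros Hr i. change (Cmod (x i - x i) < rho). rewrite Cmod_sub_diag. lra. Qed.

Lemma holo_id (U : C -> Prop) : holo_on U (fun z => z).
Proof.
  intros z0 _. exists (RtoC 1). intros eps He. exists 1. split; [lra|].
  intros z _ [Hz _]. change (Cmod ((z - z0) / (z - z0) - RtoC 1) < eps).
  replace ((z - z0) / (z - z0) - RtoC 1)%C with (RtoC 0).
  rewrite Cmod_0; lra. field. intros E. change (0 < Cmod (z - z0)) in Hz. rewrite E, Cmod_0 in Hz. lra.
Qed.

Lemma holo_const (U : C -> Prop) (k : C) : holo_on U (fun _ => k).
Proof.
  intros z0 _. exists (RtoC 0). intros eps He. exists 1. split; [lra|].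
  intros z _ [Hz _]. change (Cmod ((k - k) / (z - z0) - RtoC 0) < eps).
  replace ((k - k) / (z - z0) - RtoC 0)%C with (RtoC 0).
  rewrite Cmod_0; lra. field. intros E. change (0 < Cmod (z - z0)) in Hz. rewrite E, Cmod_0 in Hz. lra.
Qed.

Lemma holo_cderiv (c : C) r (f : C -> C) p : holo_on (ballC c r) f -> ballC c r p ->
  exists l, cderiv f p l.
Proof.
  intros H Hp. destruct (H p Hp) as [l Hl]. exists l.
  change (Cmod (p - c) < r) in Hp.
  intros eps He. destruct (Hl eps He) as [d [Hd Hz]].
  exists (Rmin d (r - Cmod (p - c))). split. { apply Rmin_pos; lra. }
  intros z Hzp. pose proof (Rmin_l d (r - Cmod (p - c))). pose proof (Rmin_r d (r - Cmod (p - c))).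
  destruct (Req_dec (Cmod (z - p)) 0) as [E|E].
  - apply Cmod_eq_0 in E. assert (z = p) by (replace z with ((z - p) + p)%C by ring; rewrite E; ring).
    subst z. replace (f p - f p - l * (p - p))%C with (RtoC 0) by ring.
    rewrite Cmod_0, E, Cmod_0. lra.
  - assert (Hzp0 : 0 < Cmod (z - p)) by (pose proof (Cmod_ge_0 (z - p)); lra).
    assert (Uz : ballC c r z) by (change (Cmod (z - c) < r); pose proof (Cmod_sub_triangle c p z); lra).
    assert (Hzd : Cmod (z - p) < d) by lra. specialize (Hz z Uz (conj Hzp0 Hzd)).
    change (Cmod ((f z - f p) / (z - p) - l) < eps) in Hz.
    assert (Nz : (z - p)%C <> RtoC 0) by (intros E'; rewrite E', Cmod_0 in Hzp0; lra).
    replace (f z - f p - l * (z - p))%C with (((f z - f p) / (z - p) - l) * (z - p))%C by (field; auto).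
    rewrite Cmod_mult. apply Rmult_le_compat_r; lra.
Qed.

Lemma ballV_vcons {m : nat} (x x' : C) (y y' : Vec m) d :
  Cmod (x' - x) < d -> ballV y d y' -> ballV (vcons x y) d (vcons x' y').
Proof.
  unfold ballV. intros H1 H2 i. pattern i. apply Fin.caseS'.
  - simpl. exact H1.
  - intros j. simpl. apply H2.
Qed.

Lemma vcons_inj_head {m : nat} (a b : C) (y : Vec m) : vcons a y = vcons b y -> a = b.
Proof. intros E. exact (f_equal (fun v => v Fin.F1) E). Qed.

Lemma vcons_inj_tail {m : nat} (x : C) (y y' : Vec m) : vcons x y = vcons x y' -> y = y'.
Proof.
  intros E. apply functional_extensionality. intros j. exact (f_equal (fun v => v (Fin.FS j)) E).
Qed.

(** * Slices of a function of A_D(K1 x K2) *)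

Section Slices.

Variables (m : nat) (K1 : C -> Prop) (K2 : Vec m -> Prop) (F : Vec (S m) -> C).
Hypothesis hF : A_D (prodset K1 K2) F.

(* z |-> (x, phi z) is an injective analytic disc in K1 x K2. *)
Lemma slice_holo_along_disc x c r phi : K1 x -> 0 < r ->
  holoV_on (ballC c r) phi -> injective_on (ballC c r) phi -> (forall z, ballC c r z -> K2 (phi z)) ->
  holo_on (ballC c r) (fun z => F (vcons x (phi z))).
Proof.
  intros Kx Hr Hphi Hinj Himg. destruct hF as [_ hH].
  apply (hH c r (fun z => vcons x (phi z)) Hr).
  - intros i. pattern i. apply Fin.caseS'.
    + simpl. apply holo_const.
    + intros j. simpl. apply Hphi.
  - intros a b Ha Hb E. apply Hinj; auto. eapply vcons_inj_tail; eauto.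
  - intros z Hz. exists x, (phi z). repeat split; auto.
Qed.

(* z |-> (z, y) is an injective analytic disc in K1 x K2 when B(c, r) lies in K1. *)
Lemma slice_holo_first y c r : K2 y -> 0 < r -> (forall z, ballC c r z -> K1 z) ->
  holo_on (ballC c r) (fun z => F (vcons z y)).
Proof.
  intros Ky Hr Hsub. destruct hF as [_ hH].
  apply (hH c r (fun z => vcons z y) Hr).
  - intros i. pattern i. apply Fin.caseS'.
    + simpl. apply holo_id.
    + intros j. simpl. apply holo_const.
  - intros a b Ha Hb E. eapply vcons_inj_head; eauto.
  - intros z Hz. exists z, y. repeat split; auto.
Qed.

Lemma F_joint_cont x y : K1 x -> K2 y -> forall eps, 0 < eps -> exists delta, 0 < delta /\
  forall x' y', K1 x' -> K2 y' -> Cmod (x' - x) < delta -> ballV y delta y' ->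
    Cmod (F (vcons x' y') - F (vcons x y)) < eps.
Proof.
  intros Kx Ky eps He. destruct hF as [hC _].
  destruct (hC (vcons x y) ltac:(exists x, y; auto) eps He) as [d [Hd H]].
  exists d. split; auto. intros x' y' Kx' Ky' H1 H2.
  apply (H (vcons x' y')). exists x', y'; auto. apply ballV_vcons; auto.
Qed.

Lemma slice_cont x y : K1 x -> K2 y -> forall eps, 0 < eps -> exists delta, 0 < delta /\
  forall y', K2 y' -> ballV y delta y' -> Cmod (F (vcons x y') - F (vcons x y)) < eps.
Proof.
  intros Kx Ky eps He. destruct (F_joint_cont x y Kx Ky eps He) as [d [Hd H]].
  exists d. split; auto. intros y' Ky' Hy'. apply H; auto. rewrite Cmod_sub_diag. lra.
Qed.

Lemma slice_A_D x : K1 x -> A_D K2 (fun y => F (vcons x y)).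
Proof.
  intros Kx. split.
  - intros y Ky eps He. exact (slice_cont x y Kx Ky eps He).
  - intros c r phi Hr Hphi Hinj Himg. exact (slice_holo_along_disc x c r phi Kx Hr Hphi Hinj Himg).
Qed.

Hypothesis hK2 : compactV K2.

(* Second part: x |-> F(x, .) is continuous for the sup norm on K2 (joint
   continuity plus a finite subcover of K2). *)
Lemma slice_uniform_cont x : K1 x -> forall eps, 0 < eps -> exists delta, 0 < delta /\
  forall x', K1 x' -> Cmod (x' - x) < delta -> forall y, K2 y ->
    Cmod (F (vcons x' y) - F (vcons x y)) < eps.
Proof.
  intros Kx eps He.
  set (P := fun (y : Vec m) (r : R) => forall x' y', K1 x' -> K2 y' -> Cmod (x' - x) < r ->
     ballV y r y' -> Cmod (F (vcons x' y') - F (vcons x y)) < eps / 2).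
  destruct (finite_subcover (@ballV m) K2 hK2 (@ballV_half_triangle m) (@ballV_center m) P)
    as [l [Hl1 Hl2]].
  { intros y Ky. destruct (F_joint_cont x y Kx Ky (eps / 2) ltac:(lra)) as [d [Hd H]].
    exists d. split; auto. }
  destruct (list_min_pos l) as [d [Hd Hdl]]. { intros q Hq. apply (Hl1 q Hq). }
  exists d. split; auto. intros x' Kx' Hx' y Ky.
  destruct (Hl2 y Ky) as [q [Hq Hb]]. destruct (Hl1 q Hq) as [Kq [Hrq Pq]].
  pose proof (Hdl q Hq).
  pose proof (Pq x' y Kx' Ky ltac:(lra) Hb) as A1.
  pose proof (Pq x y Kx Ky ltac:(rewrite Cmod_sub_diag; lra) Hb) as A2.
  replace (F (vcons x' y) - F (vcons x y))%C with
    ((F (vcons x' y) - F (vcons x (fst q))) - (F (vcons x y) - F (vcons x (fst q))))%C by ring.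
  eapply Rle_lt_trans. apply Cmod_triangle. rewrite Cmod_opp. lra.
Qed.

Lemma slice_bounded x : K1 x -> exists Mx, forall y, K2 y -> Cmod (F (vcons x y)) <= Mx.
Proof.
  intros Kx.
  set (P := fun (y : Vec m) (r : R) => forall y', K2 y' -> ballV y r y' ->
     Cmod (F (vcons x y') - F (vcons x y)) < 1).
  destruct (finite_subcover (@ballV m) K2 hK2 (@ballV_half_triangle m) (@ballV_center m) P)
    as [l [Hl1 Hl2]].
  { intros y Ky. destruct (slice_cont x y Kx Ky 1 ltac:(lra)) as [d [Hd H]].
    exists d. split; auto. }
  destruct (list_max_bound l (fun q M => Cmod (F (vcons x (fst q))) + 1 <= M)) as [M HM].
  { intros q _. exists (Cmod (F (vcons x (fst q))) + 1). lra. }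
  exists M. intros y Ky. destruct (Hl2 y Ky) as [q [Hq Hb]]. destruct (Hl1 q Hq) as [Kq [Hrq Pq]].
  pose proof (Pq y Ky Hb). destruct (HM q Hq) as [M' [H1 H2]].
  replace (F (vcons x y)) with ((F (vcons x y) - F (vcons x (fst q))) + F (vcons x (fst q)))%C by ring.
  eapply Rle_trans. apply Cmod_triangle. lra.
Qed.

Hypothesis hK1 : compactC K1.

(* F is bounded on K1 x K2: cover K1 by finitely many balls on which
   x |-> F(x, .) stays uniformly close to a bounded slice. *)
Lemma F_bounded : exists M, forall x y, K1 x -> K2 y -> Cmod (F (vcons x y)) <= M.
Proof.
  set (P := fun (x : C) (r : R) => exists M', forall x', K1 x' -> Cmod (x' - x) < r ->
     forall y, K2 y -> Cmod (F (vcons x' y)) <= M').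
  destruct (finite_subcover ballC K1 hK1 ballC_half_triangle ballC_center P) as [l [Hl1 Hl2]].
  { intros x Kx. destruct (slice_uniform_cont x Kx 1 ltac:(lra)) as [d [Hd H]].
    destruct (slice_bounded x Kx) as [Mx HMx]. exists d. split; auto. exists (Mx + 1).
    intros x' Kx' Hx' y Ky. pose proof (H x' Kx' Hx' y Ky). pose proof (HMx y Ky).
    replace (F (vcons x' y)) with ((F (vcons x' y) - F (vcons x y)) + F (vcons x y))%C by ring.
    eapply Rle_trans. apply Cmod_triangle. lra. }
  destruct (list_max_bound l (fun q M' => forall x', K1 x' -> Cmod (x' - fst q) < snd q ->
     forall y, K2 y -> Cmod (F (vcons x' y)) <= M')) as [M HM].
  { intros q Hq. apply (Hl1 q Hq). }
  exists M. intros x y Kx Ky. destruct (Hl2 x Kx) as [q [Hq Hb]].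
  destruct (HM q Hq) as [M' [H1 H2]].
  pose proof (H1 x Kx Hb y Ky). lra.
Qed.

End Slices.

(** * The derivative of x |-> F(x, .) *)

Section Derivative.

Variables (m : nat) (K1 : C -> Prop) (K2 : Vec m -> Prop) (F : Vec (S m) -> C).
Hypothesis hF : A_D (prodset K1 K2) F.
Variables (x0 : C) (rho M : R).
Hypothesis Hrho : 0 < rho.
Hypothesis Hsub : forall z, ballC x0 rho z -> K1 z.
Hypothesis HM : forall x y, K1 x -> K2 y -> Cmod (F (vcons x y)) <= M.

(* Candidate derivative at x0: Cauchy's formula for d/dx F(x0, y), on the
   square of half-side rho/4, which lies with its neighbourhood in B(x0, rho). *)
Definition deriv_slice (y : Vec m) : C := cauchy_deriv (fun z => F (vcons z y)) x0 (rho / 4).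

Lemma x0_in_K1 : K1 x0.
Proof. apply Hsub, ballC_center, Hrho. Qed.

Lemma punctured_point d : 0 < d -> exists x, K1 x /\ 0 < Cmod (x - x0) < d.
Proof.
  intros Hd. set (t := Rmin d rho / 2).
  pose proof (Rmin_l d rho). pose proof (Rmin_r d rho).
  assert (Ht : 0 < t) by (unfold t; apply Rdiv_lt_0_compat; [apply Rmin_pos|]; lra).
  assert (Htd : t < d /\ t < rho) by (unfold t; lra).
  assert (E : Cmod ((x0 + (t, 0)) - x0) = t).
  { replace ((x0 + (t, 0)) - x0)%C with (RtoC t)
      by (unfold RtoC, Cminus, Cplus, Copp; Csplit; ring).
    rewrite Cmod_R. apply Rabs_right; lra. }
  exists (x0 + (t, 0))%C. repeat split; try (rewrite E; lra).
  apply Hsub. change (Cmod ((x0 + (t, 0)) - x0) < rho). rewrite E. lra.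
Qed.

Lemma slice_dq_uniform eps : 0 < eps -> exists delta, 0 < delta /\
  forall x, 0 < Cmod (x - x0) < delta -> forall y, K2 y ->
    Cmod (dq (fun z => F (vcons z y)) x0 x - deriv_slice y) < eps.
Proof.
  intros He. set (r := rho / 4). assert (Hr : 0 < r) by (unfold r; lra).
  destruct (linear_bound_small (4 * M / (r * r)) (r / 2) eps ltac:(lra) He) as [d [Hd [Hdr Hsm]]].
  exists d. split; auto. intros x Hx y Ky.
  eapply Rle_lt_trans.
  - apply (cauchy_estimate (fun z => F (vcons z y)) x0 r M Hr); [| | lra].
    + intros z Hz. apply (holo_cderiv x0 rho).
      * apply (slice_holo_first m K1 K2 F hF y x0 rho Ky Hrho Hsub).
      * change (Cmod (z - x0) < rho). unfold r in Hz. lra.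
    + intros z Hz. apply HM; auto. apply Hsub. change (Cmod (z - x0) < rho). unfold r in Hz. lra.
  - replace (4 * M * Cmod (x - x0) / (r * r)) with (4 * M / (r * r) * Cmod (x - x0))
      by (field; lra).
    apply Hsm. lra.
Qed.

Lemma slice_dq_cont x y : K1 x -> 0 < Cmod (x - x0) -> K2 y ->
  forall eps, 0 < eps -> exists d, 0 < d /\ forall y', K2 y' -> ballV y d y' ->
    Cmod (dq (fun z => F (vcons z y')) x0 x - dq (fun z => F (vcons z y)) x0 x) <= eps.
Proof.
  intros Kx Hx Ky eps He.
  assert (Nx : (x - x0)%C <> RtoC 0) by (intros E; rewrite E, Cmod_0 in Hx; lra).
  set (t := Cmod (x - x0)) in *.
  assert (Het : 0 < eps * t / 2) by (apply Rdiv_lt_0_compat; [apply Rmult_lt_0_compat|]; lra).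
  destruct (slice_cont m K1 K2 F hF x y Kx Ky (eps * t / 2) Het) as [d1 [Hd1 H1]].
  destruct (slice_cont m K1 K2 F hF x0 y x0_in_K1 Ky (eps * t / 2) Het) as [d2 [Hd2 H2]].
  exists (Rmin d1 d2). split; [apply Rmin_pos; auto|]. intros y' Ky' Hy'.
  assert (A1 : Cmod (F (vcons x y') - F (vcons x y)) < eps * t / 2).
  { apply H1; auto. intros i. pose proof (Hy' i). pose proof (Rmin_l d1 d2). lra. }
  assert (A2 : Cmod (F (vcons x0 y') - F (vcons x0 y)) < eps * t / 2).
  { apply H2; auto. intros i. pose proof (Hy' i). pose proof (Rmin_r d1 d2). lra. }
  unfold dq; cbv beta.
  replace ((F (vcons x y') - F (vcons x0 y')) / (x - x0) - (F (vcons x y) - F (vcons x0 y)) / (x - x0))%C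
    with (((F (vcons x y') - F (vcons x y)) - (F (vcons x0 y') - F (vcons x0 y))) / (x - x0))%C
    by (field; auto).
  rewrite Cmod_div by auto. fold t.
  apply (Rmult_le_reg_r t); auto. unfold Rdiv. rewrite Rmult_assoc, Rinv_l, Rmult_1_r by lra.
  eapply Rle_trans. apply Cmod_triangle. rewrite Cmod_opp. lra.
Qed.

(* [deriv_slice] is continuous on K2, as a uniform limit of continuous functions. *)
Lemma deriv_slice_cont y : K2 y -> forall eps, 0 < eps -> exists d, 0 < d /\
  forall y', K2 y' -> ballV y d y' -> Cmod (deriv_slice y' - deriv_slice y) < eps.
Proof.
  intros Ky. apply (uniform_limit_cont K2 (fun d y' => ballV y d y') deriv_slice y Ky).
  intros eps He. destruct (slice_dq_uniform eps He) as [d [Hd H]].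
  destruct (punctured_point d Hd) as [x [Kx Hx]].
  exists (fun y' => dq (fun z => F (vcons z y')) x0 x). split.
  - intros y' Ky'. apply Rlt_le, H; auto.
  - apply slice_dq_cont; auto; lra.
Qed.

Lemma deriv_slice_bound y : K2 y -> Cmod (deriv_slice y) <= 2 * M / (rho / 4).
Proof.
  intros Ky. apply (cauchy_deriv_bound (fun z => F (vcons z y)) x0 (rho / 4) M); [lra| |].
  - intros z Hz. destruct (holo_cderiv x0 rho (fun z => F (vcons z y)) z) as [l Hl].
    + apply (slice_holo_first m K1 K2 F hF y x0 rho Ky Hrho Hsub).
    + change (Cmod (z - x0) < rho). pose proof (on_sq_close z x0 (rho / 4) ltac:(lra) Hz). lra.
    + eapply cderiv_cont; eauto.
  - intros z Hz. apply HM; auto. apply Hsub. change (Cmod (z - x0) < rho).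
    pose proof (on_sq_close z x0 (rho / 4) ltac:(lra) Hz). lra.
Qed.

(* [deriv_slice] is holomorphic along every analytic disc in K2: along the disc
   it is a bounded uniform limit of holomorphic difference quotients. *)
Lemma deriv_slice_holo c r phi : 0 < r -> holoV_on (ballC c r) phi -> injective_on (ballC c r) phi ->
  (forall z, ballC c r z -> K2 (phi z)) ->
  holo_on (ballC c r) (fun z => deriv_slice (phi z)).
Proof.
  intros Hr Hphi Hinj Himg z0 Hz0. change (Cmod (z0 - c) < r) in Hz0.
  assert (Hdisc : forall z, Cmod (z - z0) < r - Cmod (z0 - c) -> ballC c r z).
  { intros z Hz. change (Cmod (z - c) < r). pose proof (Cmod_sub_triangle c z0 z). lra. }
  assert (Hdiff : exists l, dq_limit (fun z => deriv_slice (phi z)) z0 l).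
  { apply (uniform_limit_differentiable (fun z => deriv_slice (phi z)) z0 (r - Cmod (z0 - c))
             (2 * M / (rho / 4))); [lra| |].
    - intros z Hz. apply deriv_slice_bound, Himg, Hdisc, Hz.
    - intros eps He. destruct (slice_dq_uniform eps He) as [d [Hd H]].
      destruct (punctured_point d Hd) as [x [Kx Hx]].
      exists (fun z => dq (fun t => F (vcons t (phi z))) x0 x). split.
      + intros z Hz.
        destruct (holo_cderiv c r _ z
                   (slice_holo_along_disc m K1 K2 F hF x c r phi Kx Hr Hphi Hinj Himg)
                   (Hdisc z Hz)) as [l1 Hl1].
        destruct (holo_cderiv c r _ z
                   (slice_holo_along_disc m K1 K2 F hF x0 c r phi x0_in_K1 Hr Hphi Hinj Himg)
                   (Hdisc z Hz)) as [l0 Hl0].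
        eexists. unfold dq.
        apply (cderiv_ext (fun z => (F (vcons x (phi z)) - F (vcons x0 (phi z)))
                                    * (fun _ => / (x - x0)) z)%C).
        { intros; reflexivity. }
        apply cderiv_mult; [apply cderiv_minus; eauto| apply cderiv_const].
      + intros z Hz. apply Rlt_le, H; [lra|]. apply Himg, Hdisc, Hz. }
  destruct Hdiff as [l Hl].
  exists l. intros eps He. destruct (Hl eps He) as [d [Hd H]].
  exists d. split; auto. intros z _ Hz. exact (H z Hz).
Qed.

End Derivative.

Import Pilot.Defs.

Theorem mainTheorem12 (m : nat) (K1 : Cx -> Prop) (K2 : Vec m -> Prop)
  (hK1 : compactC K1) (hK2 : compactV K2)
  (F : Vec (S m) -> Cx) (hF : A_D (prodset K1 K2) F) :
  (* each slice F(x, .) lies in A_D(K2) *)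
  (forall x, K1 x -> A_D K2 (fun y => F (vcons x y))) /\
  (* x |-> F(x, .) is continuous K1 -> (A_D(K2), sup norm) *)
  (forall x0, K1 x0 -> forall eps, 0 < eps -> exists delta, 0 < delta /\
     forall x, K1 x -> Cabs (Csub x x0) < delta ->
       forall y, K2 y -> Cabs (Csub (F (vcons x y)) (F (vcons x0 y))) < eps) /\
  (* x |-> F(x, .) is holomorphic on the interior of K1 as an A_D(K2)-valued map *)
  (forall x0, interiorC K1 x0 ->
     exists G : Vec m -> Cx, A_D K2 G /\
       forall eps, 0 < eps -> exists delta, 0 < delta /\
         forall x, K1 x -> 0 < Cabs (Csub x x0) < delta ->
           forall y, K2 y ->
             Cabs (Csub (Cdiv (Csub (F (vcons x y)) (F (vcons x0 y))) (Csub x x0)) (G y)) < eps).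
Proof.
  split; [|split].
  - exact (slice_A_D m K1 K2 F hF).
  - exact (slice_uniform_cont m K1 K2 F hF hK2).
  - intros x0 [rho [Hrho Hsub]].
    destruct (F_bounded m K1 K2 F hF hK2 hK1) as [M HM].
    exists (deriv_slice m F x0 rho). split; [split|].
    + exact (deriv_slice_cont m K1 K2 F hF x0 rho M Hrho Hsub HM).
    + exact (deriv_slice_holo m K1 K2 F hF x0 rho M Hrho Hsub HM).
    + intros eps He.
      destruct (slice_dq_uniform m K1 K2 F hF x0 rho M Hrho Hsub HM eps He) as [d [Hd H]].
      exists d. split; auto. intros x _ Hx y Ky. exact (H x Hx y Ky).
Qed.
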